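(* Let $R$ be a commutative domain, $B=R(t,\sigma,H,J)$, let $\mathcal O\subseteq\operatorname{Maxspec}(R)$ be an infinite $\sigma$-orbit and $\beta\subseteq\mathcal O$ its set of breaks. (1) If $\beta=\emptyset$, then $M(\mathcal O)$ is a simple $R$-weight $B$-module, and every simple $B$-module that is an $R$-weight module with support in $\mathcal O$ is isomorphic to $M(\mathcal O)$. (2) If $\beta\neq\emptyset$, then the modules $M(\mathcal O,\mathfrak n)$, $\mathfrak n\in\beta'$, are simple $R$-weight $B$-modules, and every simple $B$-module that is an $R$-weight module with support in $\mathcal O$ is isomorphic to exactly one of them.
   Context: $\Bbbk$ is a field; all algebras are associative unital $\Bbbk$-algebras. For an algebra $R$ and $\sigma\in\operatorname{Aut}_\Bbbk(R)$, $R[t,t^{-1};\sigma]$ is the skew Laurent ring: generated over $R$ by $t,t^{-1}$ with $tt^{-1}=t^{-1}t=1$ and $t^{\pm1}r=\sigma^{\pm1}(r)t^{\pm1}$ for $r\in R$. Given two-sided ideals $H,J$ of $R$, set $I^{(0)}=R$, $I^{(n)}=J\sigma(J)\cdots\sigma^{n-1}(J)$ for $n\ge1$, and $I^{(n)}=\sigma^{-1}(H)\sigma^{-2}(H)\cdots\sigma^{n}(H)$ for $n\le-1$; it is assumed throughout that $I^{(n)}\neq0$ for all $n\in\mathbb Z$. The Bell–Rogalski (BR) algebra is $R(t,\sigma,H,J)=\bigoplus_{n\in\mathbb Z}I^{(n)}t^n\subseteq R[t,t^{-1};\sigma]$; it is generated by $R$, $Jt$ and $\sigma^{-1}(H)t^{-1}$.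 For $R$ commutative, $\mathcal S(B)=\{\mathfrak p\in\operatorname{Spec}(R):\mathfrak p\supseteq HJ\}$. For $R$ a commutative domain, a left $B$-module $M$ is an $R$-weight module if $M=\bigoplus_{\mathfrak m\in\operatorname{Maxspec}(R)}M_{\mathfrak m}$ where $M_{\mathfrak m}=\{v\in M:\mathfrak m v=0\}$ and $\dim_{R/\mathfrak m}M_{\mathfrak m}<\infty$ for all $\mathfrak m$. $\mathbb Z$ acts on $\operatorname{Maxspec}(R)$ by $k\cdot\mathfrak m=\sigma^k(\mathfrak m)$; orbits are called $\sigma$-orbits. A maximal ideal $\mathfrak m$ is a break for $B$ if $\sigma(\mathfrak m)\in\mathcal S(B)$. For an infinite orbit $\mathcal O$, order it by $\sigma^a(\mathfrak m)<\sigma^b(\mathfrak m)$ iff $a<b$, extended to $\mathcal O\cup\{\pm\infty\}$. Define $M(\mathcal O)=\bigoplus_{\mathfrak m\in\mathcal O}(R/\mathfrak m)v_{\mathfrak m}$ with $R$ acting naturally, $jt\cdot v_{\mathfrak m}=jv_{\sigma(\mathfrak m)}$ and $\sigma^{-1}(h)t^{-1}\cdot v_{\mathfrak m}=\sigma^{-1}(h)v_{\sigma^{-1}(\mathfrak m)}$ for $j\in J,h\in H$. If the set of breaks $\beta\subseteq\mathcal O$ is nonempty, let $\beta'=\beta\cup\{\infty\}$ if $\beta$ has a maximal element and $\beta'=\beta$ otherwise; for $\mathfrak n\in\beta'$ let $\mathfrak n^-$ be the largest element of $\beta'$ smaller than $\mathfrak n$, or $-\infty$ if none. Define $M(\mathcal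 O,\mathfrak n)=\bigoplus_{\mathfrak m\in\mathcal O,\ \mathfrak n^-<\mathfrak m\le\mathfrak n}(R/\mathfrak m)v_{\mathfrak m}$ (with $\mathfrak m<\infty$ when $\mathfrak n=\infty$), with $R$ acting naturally, $jt\cdot v_{\mathfrak m}=jv_{\sigma(\mathfrak m)}$ if $\mathfrak m<\mathfrak n$ and $=0$ if $\mathfrak m=\mathfrak n$, and $\sigma^{-1}(h)t^{-1}\cdot v_{\mathfrak m}=\sigma^{-1}(h)v_{\sigma^{-1}(\mathfrak m)}$ if $\sigma^{-1}(\mathfrak m)>\mathfrak n^-$ and $=0$ if $\sigma^{-1}(\mathfrak m)=\mathfrak n^-$. *)

From HB Require Import structures.
From mathcomp Require Import all_boot all_order all_algebra.
From Stdlib Require List ClassicalEpsilon.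
Set Implicit Arguments. Unset Strict Implicit. Unset Printing Implicit Defensive.
Import Order.TTheory GRing.Theory Num.Theory.
Local Open Scope ring_scope.

Section Ideals.
Variable R : comNzRingType.
Implicit Types I K : R -> Prop.

Definition incl I K := forall x, I x -> K x.

Definition is_ideal I :=
  I 0 /\ (forall x y, I x -> I y -> I (x + y)) /\ (forall r x, I x -> I (r * x)).

Definition is_prime_ideal I :=
  is_ideal I /\ ~ I 1 /\ (forall x y, I (x * y) -> I x \/ I y).

Definition is_max_ideal I :=
  is_ideal I /\ ~ I 1 /\
  (forall K, is_ideal K -> incl I K -> incl K I \/ K 1).

Definition idprod I K : R -> Prop := fun x =>
  exists s : seq (R * R),
    List.Forall (fun p => I p.1 /\ K p.2) s /\ x = \sum_(p <- s) p.1 * p.2.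
End Ideals.

Section BRalg.
Variable R : comNzRingType.
Variables (sigma sigmai : R -> R).

Definition spow (n : int) : R -> R :=
  match n with Posz k => iter k sigma | Negz k => iter k.+1 sigmai end.

(* sigma^n(I) = { sigma^n y | y in I } = { x | sigma^(-n) x in I } *)
Definition simg (n : int) (I : R -> Prop) : R -> Prop := fun x => I (spow (- n) x).

Variables H J : R -> Prop.

Fixpoint Jprod (k : nat) : R -> Prop :=
  match k with 0 => fun _ => True | k'.+1 => idprod (Jprod k') (simg (Posz k') J) end.
(* sigma^-1(H) sigma^-2(H) ... sigma^-k(H) *)
Fixpoint Hprod (k : nat) : R -> Prop :=
  match k with 0 => fun _ => True | k'.+1 => idprod (Hprod k') (simg (Negz k') H) end.

(* I^(n); B = (+)_n I^(n) t^n *)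
Definition Ipow (n : int) : R -> Prop :=
  match n with Posz k => Jprod k | Negz k => Hprod k.+1 end.

(* A left B-module: an abelian group with, for each n and r in I^(n),
   the action of the homogeneous element r t^n of B.  Since
   B = (+)_n I^(n) t^n with (r t^n)(s t^m) = r sigma^n(s) t^(n+m), this is
   exactly a left B-module.  Values of [mact n r] for r outside I^(n) are
   irrelevant (never used). *)
Record bmod := BMod {
  mcar : Type;
  mzero : mcar;
  madd : mcar -> mcar -> mcar;
  mopp : mcar -> mcar;
  mact : int -> R -> mcar -> mcar }.
Arguments mzero : clear implicits.
Arguments mact : clear implicits.

Definition is_bmod (M : bmod) :=
  (forall x y z : mcar M, madd x (madd y z) = madd (madd x y) z) /\
  (forall x y : mcar M, madd x y = madd y x) /\
  (forall x, madd (mzero M) x = x) /\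
  (forall x, madd (mopp x) x = mzero M) /\
  (forall n r x y, Ipow n r -> mact M n r (madd x y) = madd (mact M n r x) (mact M n r y)) /\
  (forall n r s x, Ipow n r -> Ipow n s ->
      mact M n (r + s) x = madd (mact M n r x) (mact M n s x)) /\
  (forall n m r s x, Ipow n r -> Ipow m s ->
      mact M n r (mact M m s x) = mact M (n + m) (r * spow n s) x) /\
  (forall x, mact M 0 1 x = x).

Definition is_submod (M : bmod) (N : mcar M -> Prop) :=
  N (mzero M) /\ (forall x y, N x -> N y -> N (madd x y)) /\
  (forall x, N x -> N (mopp x)) /\
  (forall n r x, Ipow n r -> N x -> N (mact M n r x)).

Definition is_simple (M : bmod) :=
  (exists v : mcar M, v <> mzero M) /\
  (forall N, is_submod N -> (forall x, N x -> x = mzero M) \/ (forall x, N x)).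

Definition bmod_iso (M M' : bmod) :=
  exists f : mcar M -> mcar M',
    bijective f /\ (forall x y, f (madd x y) = madd (f x) (f y)) /\
    (forall n r x, Ipow n r -> f (mact M n r x) = mact M' n r (f x)).

Definition msum (M : bmod) (l : list (mcar M)) := List.fold_right (@madd M) (mzero M) l.
Arguments msum : clear implicits.

(* weight space M_m = { v | m v = 0 }, R acting as R t^0 *)
Definition wspace (M : bmod) (m : R -> Prop) (v : mcar M) :=
  forall r, m r -> mact M 0 r v = mzero M.
Arguments wspace : clear implicits.

(* M = (+)_{m in Maxspec R} M_m with each M_m finite dimensional over R/m *)
Definition is_weight (M : bmod) :=
  (forall v : mcar M, exists s : list ((R -> Prop) * mcar M),
      List.Forall (fun p => is_max_ideal p.1 /\ wspace M p.1 p.2) s /\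
      v = msum M (List.map snd s)) /\
  (forall s : list ((R -> Prop) * mcar M),
      List.NoDup (List.map fst s) ->
      List.Forall (fun p => is_max_ideal p.1 /\ wspace M p.1 p.2) s ->
      msum M (List.map snd s) = mzero M -> List.Forall (fun p => p.2 = mzero M) s) /\
  (forall m, is_max_ideal m -> exists bs : list (mcar M),
      List.Forall (wspace M m) bs /\
      forall v, wspace M m v -> exists cs : list R,
        List.length cs = List.length bs /\
        v = msum M (List.map (fun p => mact M 0 p.1 p.2) (List.combine cs bs))).

Variable m0 : R -> Prop.

Definition orb (a : int) : R -> Prop := simg a m0.

Definition orbit_infinite :=
  ~ exists l : list (R -> Prop), forall a, List.In (orb a) l.

Definition supp_in_orbit (M : bmod) :=
  forall m, is_max_ideal m -> (exists v, wspace M m v /\ v <> mzero M) ->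
    exists a, m = orb a.

Definition is_break (m : R -> Prop) :=
  is_prime_ideal (simg 1 m) /\ incl (idprod H J) (simg 1 m).

Definition brk (a : int) := is_break (orb a).

(* beta' : Some b = sigma^b(m0) with b a break, None = +infinity *)
Definition in_beta' (n : option int) :=
  match n with
  | Some b => brk b
  | None => exists b, brk b /\ forall c, brk c -> c <= b
  end.

Definition lt_opt (c : int) (n : option int) :=
  match n with Some b => (c < b)%R | None => true end.

(* lo is n^- : largest element of beta' below n (None = -infinity) *)
Definition is_nminus (n lo : option int) :=
  match lo with
  | Some c => brk c /\ lt_opt c n /\ (forall c', brk c' -> lt_opt c' n -> c' <= c)
  | None => forall c', brk c' -> ~ lt_opt c' n
  end.

(* ---------- the modules (+)_{lo < a <= hi} (R/sigma^a(m0)) v_a ---------- *)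
Definition inI (lo hi : option int) (a : int) : bool :=
  (if lo is Some l then l < a else true) && (if hi is Some h then a <= h else true).

(* formal finite sums  sum r_i v_{a_i}  *)
Definition coef (x : seq (int * R)) (a : int) : R := \sum_(p <- x | p.1 == a) p.2.

Definition reln (lo hi : option int) (x y : seq (int * R)) : Prop :=
  forall a, inI lo hi a -> orb a (coef x a - coef y a).

Definition qcar (lo hi : option int) :=
  {S : seq (int * R) -> Prop | exists x, S = reln lo hi x}.

Definition cls (lo hi : option int) (x : seq (int * R)) : qcar lo hi :=
  exist _ (reln lo hi x) (ex_intro _ x erefl).

Definition rep (lo hi : option int) (q : qcar lo hi) : seq (int * R) :=
  proj1_sig (ClassicalEpsilon.constructive_indefinite_description _ (proj2_sig q)).

(* (r t^k) . (s v_a) = r sigma^k(s) v_{a+k}, which is 0 when a+k is outside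
   the interval (lo, hi] *)
Definition rawact (lo hi : option int) (k : int) (r : R) (x : seq (int * R)) :=
  [seq (p.1 + k, r * spow k p.2) | p <- x & inI lo hi p.1].

Definition MI (lo hi : option int) : bmod :=
  @BMod (qcar lo hi) (cls lo hi [::])
    (fun u w => cls lo hi (rep u ++ rep w))
    (fun u => cls lo hi [seq (p.1, - p.2) | p <- rep u])
    (fun k r u => cls lo hi (rawact lo hi k r (rep u))).

Definition MO : bmod := MI None None.
(* M(O, n) for n in beta', with lo = n^- *)
Definition MOn (lo n : option int) : bmod := MI lo n.
End BRalg.

(* Write v_a for the basis vector of weight sigma^a(m0).  The action of H and
   J moves v_a to multiples of v_(a+1) and back, and the multiple can be chosen
   to be a unit modulo the next maximal ideal exactly when a is not a break.
   Hence, on an interval (lo, hi] of the orbit whose finite endpoints are breaks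
   and which contains no break other than hi, every nonzero submodule contains
   some v_a, and then all of them: the truncated module M(lo, hi) is simple.
   It is a module at all because a product of homogeneous elements of B that
   leaves (lo, hi] and comes back crosses a boundary break b, and so acquires a
   factor h j (h in H, j in J) lying in sigma^(b+1)(m0).
   Conversely, let M be simple and weight, and let w be a nonzero vector of
   weight sigma^a0(m0), with a0 in the interval (lo, hi] between consecutive
   elements of beta'.  The same crossing argument shows that every r t^n taking
   a0 outside (lo, hi] kills w.  So v_a |-> g_a t^(a - a0) w, where g_a in
   I^(a - a0) is 1 modulo sigma^a(m0), is a well-defined homomorphism
   M(lo, hi) -> M, which is nonzero and hence an isomorphism of simple
   modules.  The support of M determines (lo, hi], hence the index in beta'. *)

From Pilot Require Import Defs.
From HB Require Import structures.
From mathcomp Require Import all_boot all_order all_algebra.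
From mathcomp Require Import boolp zify ring.
From Stdlib Require List.
Set Implicit Arguments. Unset Strict Implicit. Unset Printing Implicit Defensive.
Import Order.TTheory GRing.Theory Num.Theory.
Local Open Scope ring_scope.

Section Ideals.
Variable R : comNzRingType.
Implicit Types (I K P m : R -> Prop) (x y : R).

Lemma ideal0 I : is_ideal I -> I 0. Proof. by case. Qed.
Lemma idealD I x y : is_ideal I -> I x -> I y -> I (x + y).
Proof. by case=> _ [] + _; apply. Qed.
Lemma idealMl I r x : is_ideal I -> I x -> I (r * x).
Proof. by case=> _ [] _; apply. Qed.
Lemma idealMr I r x : is_ideal I -> I x -> I (x * r).
Proof. by rewrite mulrC; apply: idealMl. Qed.
Lemma idealN I x : is_ideal I -> I x -> I (- x).
Proof. by rewrite -mulN1r; apply: idealMl. Qed.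
Lemma idealB I x y : is_ideal I -> I x -> I y -> I (x - y).
Proof. by move=> hI hx hy; apply: idealD => //; apply: idealN. Qed.
Lemma ideal_sum I (T : Type) (s : seq T) (F : T -> R) : is_ideal I ->
  (forall t, List.In t s -> I (F t)) -> I (\sum_(t <- s) F t).
Proof.
move=> hI; elim: s => [|a s IH] h; first by rewrite big_nil; apply: ideal0.
by rewrite big_cons; apply: idealD => //; [apply: h; left | apply: IH => t ht; apply: h; right].
Qed.

Lemma full_ideal : is_ideal (fun _ : R => True). Proof. by []. Qed.

Lemma max_ideal_eq m K : is_max_ideal m -> is_ideal K -> ~ K 1 -> incl m K -> m = K.
Proof.
case=> _ [_ hmax] hK nK1 hmK; case: (hmax K hK hmK) => [hKm|//].
by apply: funext => x; apply: propext; split; [apply: hmK | apply: hKm].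
Qed.

Lemma max_ideal_inv m c : is_max_ideal m -> ~ m c -> exists d, m (d * c - 1).
Proof.
move=> hm hc; have [hI [_ hmax]] := hm.
pose K x := exists y z, m z /\ x = y * c + z.
have hK : is_ideal K.
  split; first by exists 0, 0; split; [apply: ideal0 | rewrite mul0r addr0].
  split=> [x1 x2 [y1 [z1 [h1 ->]]] [y2 [z2 [h2 ->]]] | r x1 [y1 [z1 [h1 ->]]]].
    by exists (y1 + y2), (z1 + z2); split; [apply: idealD | ring].
  by exists (r * y1), (r * z1); split; [apply: idealMl | ring].
case: (hmax K hK) => [x hx | hKm | [y [z [hz e]]]].
- by exists 0, x; rewrite mul0r add0r.
- by case: hc; apply: hKm; exists 1, 0; split; [apply: ideal0 | rewrite mul1r addr0].
- by exists y; rewrite (_ : y * c - 1 = - z); [apply: idealN | rewrite e; ring].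
Qed.

Lemma max_ideal_prime m : is_max_ideal m -> is_prime_ideal m.
Proof.
move=> hm; have [hI [h1 _]] := hm; split => //; split => // x y hxy.
case: (pselect (m x)) => hx; [by left | right].
have [d hd] := max_ideal_inv hm hx.
rewrite (_ : y = d * (x * y) - (d * x - 1) * y); last by ring.
by apply: idealB => //; [apply: idealMl | apply: idealMr].
Qed.

Lemma idprod_subl I K : is_ideal I -> incl (idprod I K) I.
Proof.
move=> hI x [s [hs ->]]; apply: ideal_sum => // p.
move=> /(proj1 (List.Forall_forall _ _) hs) [hp _].
exact: idealMr.
Qed.
Lemma idprod_subr I K : is_ideal K -> incl (idprod I K) K.
Proof.
move=> hK x [s [hs ->]]; apply: ideal_sum => // p.
move=> /(proj1 (List.Forall_forall _ _) hs) [_ hp].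
exact: idealMl.
Qed.
Lemma idprod_mul I K x y : I x -> K y -> idprod I K (x * y).
Proof. by move=> hx hy; exists [:: (x, y)]; split; [constructor | rewrite big_seq1]. Qed.
Lemma idprod_mono I K I' K' : incl I I' -> incl K K' -> incl (idprod I K) (idprod I' K').
Proof.
move=> hI hK x [s [hs ->]]; exists s; split => //.
by apply: List.Forall_impl hs => p [] *; split; [apply: hI | apply: hK].
Qed.
Lemma idprod_mull (A I K C : R -> Prop) x y :
  (forall a b, A a -> I b -> C (a * b)) -> A x -> idprod I K y -> idprod C K (x * y).
Proof.
move=> hAIC hx [s [/(proj1 (List.Forall_forall _ _)) hs ->]].
exists [seq (x * p.1, p.2) | p <- s]; split.
  by apply/List.Forall_forall => p /List.in_map_iff [q [<- /hs [hq1 hq2]]]; split => //; apply: hAIC.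
by rewrite big_map mulr_sumr; apply: eq_bigr => p _; rewrite mulrA.
Qed.
Lemma idprod_ideal I K : is_ideal I -> is_ideal (idprod I K).
Proof.
move=> hI; split; first by exists [::]; rewrite big_nil.
split=> [x y [s1 [h1 ->]] [s2 [h2 ->]] | r x hx].
  by exists (s1 ++ s2); rewrite big_cat; split => //; apply/List.Forall_app.
by apply: (idprod_mull (A := fun _ => True)) hx => // a b _; apply: idealMl.
Qed.

Lemma prime_idprod_notin P I K : is_prime_ideal P ->
  (exists x, I x /\ ~ P x) -> (exists y, K y /\ ~ P y) -> exists z, idprod I K z /\ ~ P z.
Proof.
case=> _ [_ hP] [x [hx nx]] [y [hy ny]].
by exists (x * y); split; [apply: idprod_mul | case/hP].
Qed.
End Ideals.
Arguments idealMl {R I r x}.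
Arguments idealMr {R I r x}.

Section IteratedProduct.
Variable R : comNzRingType.
Variable F : nat -> R -> Prop.
Hypothesis F_ideal : forall i, is_ideal (F i).

Fixpoint iprod k : R -> Prop :=
  if k is k'.+1 then idprod (iprod k') (F k') else fun _ => True.

Lemma iprod_ideal k : is_ideal (iprod k).
Proof. by elim: k => [|k IH]; [exact: full_ideal | exact: idprod_ideal]. Qed.

Lemma iprod_factor k i x : iprod k x -> (i < k)%N -> F i x.
Proof.
elim: k x => // k IH x /= hx; rewrite ltnS leq_eqVlt => /orP [/eqP -> | hi].
  exact: idprod_subr hx.
exact: IH (idprod_subl (iprod_ideal k) hx) hi.
Qed.

Lemma iprod_mono j k : (j <= k)%N -> incl (iprod k) (iprod j).
Proof.
move/subnK <-; elim: (k - j)%N => // d IH x hx; apply: IH.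
by rewrite addSn in hx; apply: (idprod_subl (iprod_ideal _) hx).
Qed.

Lemma iprod_notin P k : is_prime_ideal P ->
  (forall i, (i < k)%N -> exists x, F i x /\ ~ P x) -> exists x, iprod k x /\ ~ P x.
Proof.
move=> hP; elim: k => [|k IH] h; first by exists 1; case: hP => _ [].
by apply: prime_idprod_notin => //; [apply: IH => i hi; apply: h; lia | apply: h].
Qed.
End IteratedProduct.

Lemma ge0_Posz (z : int) : 0 <= z -> exists k : nat, z = k.
Proof. by case: z => // k; exists k. Qed.

Lemma inI_between lo hi a b c : inI lo hi a -> inI lo hi b -> a <= c <= b -> inI lo hi c.
Proof. by rewrite /inI; case: lo => [l|]; case: hi => [h|] //=; lia. Qed.

Lemma List_mapE (A B : Type) (f : A -> B) (s : seq A) : List.map f s = map f s.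
Proof. by elim: s => //= a s ->. Qed.

Lemma List_InP (T : eqType) (x : T) (s : seq T) : List.In x s <-> x \in s.
Proof.
elim: s => [|y s IH] //=; rewrite in_cons; split.
  by case=> [-> | /IH ->]; rewrite ?eqxx ?orbT.
by case/orP => [/eqP -> | /IH]; [left | right].
Qed.

Lemma NoDup_map_inj (T : eqType) (U : Type) (f : T -> U) (s : seq T) :
  injective f -> uniq s -> List.NoDup (List.map f s).
Proof.
move=> finj; elim: s => [|a s IH] /=; first by constructor.
move=> /andP [ha hu]; constructor; last exact: IH.
by move=> /List.in_map_iff [b [/finj -> /List_InP hb]]; rewrite hb in ha.
Qed.

Section FormalSums.
Variable R : comNzRingType.
Implicit Types (x y : seq (int * R)) (a : int).

Lemma coef_nil a : coef ([::] : seq (int * R)) a = 0.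
Proof. by rewrite /coef big_nil. Qed.
Lemma coef_cons (p : int * R) x a : coef (p :: x) a = (if p.1 == a then p.2 else 0) + coef x a.
Proof. by rewrite /coef big_cons; case: ifP; rewrite ?add0r. Qed.
Lemma coef_seq1 b (c : R) a : coef [:: (b, c)] a = if b == a then c else 0.
Proof. by rewrite coef_cons coef_nil addr0. Qed.
Lemma coef_cat x y a : coef (x ++ y) a = coef x a + coef y a.
Proof. by rewrite /coef big_cat. Qed.
Lemma coef_opp x a : coef [seq (p.1, - p.2) | p <- x] a = - coef x a.
Proof. by rewrite /coef big_map sumrN. Qed.
Lemma coef_flatten (xs : seq (seq (int * R))) a : coef (flatten xs) a = \sum_(y <- xs) coef y a.
Proof. by elim: xs => [|y xs IH]; rewrite ?coef_nil ?big_nil //= coef_cat big_cons IH. Qed.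
Lemma coef_notin x a : a \notin map fst x -> coef x a = 0.
Proof.
move=> hx; rewrite /coef big_seq_cond big1 // => p /andP [hp /eqP e].
by rewrite -e (map_f fst hp) in hx.
Qed.
End FormalSums.

Lemma sum_pick (V : nmodType) (L : seq int) (F : int -> V) a : uniq L ->
  \sum_(b <- L) (if b == a then F b else 0) = if a \in L then F a else 0.
Proof.
move=> uL; case: ifP => h; first by rewrite (bigD1_seq a) //= eqxx big1 ?addr0 // => b /negPf ->.
by rewrite big1_seq // => b /andP [_ hb]; case: eqP => // e; rewrite -e hb in h.
Qed.

Lemma partition_sum (T : eqType) (V : nmodType) (l : seq T) (f : T -> int) (F : T -> V) :
  \sum_(c <- undup (map f l)) \sum_(p <- l | f p == c) F p = \sum_(p <- l) F p.
Proof.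
under eq_bigr do rewrite big_mkcond.
rewrite exchange_big /=; apply: eq_big_seq => p hp.
rewrite (bigD1_seq (f p)) ?undup_uniq ?mem_undup ?map_f //= eqxx big1 ?addr0 //.
by move=> c /negPf; rewrite eq_sym => ->.
Qed.

Lemma int_bounded_max (P : int -> Prop) B : (exists c, P c) -> (forall c, P c -> c <= B) ->
  exists c, P c /\ forall c', P c' -> c' <= c.
Proof.
move=> [c0 hc0] hB.
have hex : exists k : nat, `[< P (B - k%:Z) >].
  by exists `|B - c0|%N; apply/asboolP; rewrite gez0_abs ?subKr // subr_ge0; apply: hB.
case: (ex_minnP hex) => k /asboolP hk hmin; exists (B - k%:Z); split => // c' hc'.
have hc'B := hB c' hc'.
have ed : `|B - c'|%N%:Z = B - c' by rewrite gez0_abs // subr_ge0.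
by have := hmin `|B - c'|%N; rewrite ed subKr => /(_ (introT (asboolP _) hc')); lia.
Qed.

Lemma int_bounded_min (P : int -> Prop) B : (exists c, P c) -> (forall c, P c -> B <= c) ->
  exists c, P c /\ forall c', P c' -> c <= c'.
Proof.
move=> [c0 hc0] hB.
have [|c hc|c [hc hmax]] := @int_bounded_max (fun c => P (- c)) (- B).
- by exists (- c0); rewrite opprK.
- by have := hB _ hc; lia.
exists (- c); split => // c' hc'.
by have := hmax (- c'); rewrite opprK => /(_ hc'); lia.
Qed.

Lemma iter_rmorphism (R : pzRingType) (f : {rmorphism R -> R}) k :
  zmod_morphism (iter k f) * monoid_morphism (iter k f).
Proof.
elim: k => [|k [IHB [IH1 IHM]]]; first by [].
by split; [|split] => [x y||x y] /=; rewrite ?IHB ?IH1 ?IHM ?rmorphB ?rmorph1 ?rmorphM.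
Qed.

(** * Powers of sigma and the graded pieces I^(n) *)

Section BellRogalski.
Variable R : comNzRingType.
Variables (sigma : {rmorphism R -> R}) (sigmai : R -> R).
Hypotheses (sigmaK : cancel sigma sigmai) (sigmaiK : cancel sigmai sigma).
Implicit Types (I K : R -> Prop) (n m : int).

HB.instance Definition _ :=
  GRing.isZmodMorphism.Build R R sigmai (can2_zmod_morphism sigmaK sigmaiK).
HB.instance Definition _ :=
  GRing.isMonoidMorphism.Build R R sigmai (can2_monoid_morphism sigmaK sigmaiK).

Local Notation spow := (spow sigma sigmai).
Local Notation simg := (simg sigma sigmai).

Lemma spow_zmod_morphism n : zmod_morphism (spow n).
Proof. by case: n => k; [exact: (iter_rmorphism sigma k).1 | exact: (iter_rmorphism sigmai k.+1).1]. Qed.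
Lemma spow_monoid_morphism n : monoid_morphism (spow n).
Proof. by case: n => k; [exact: (iter_rmorphism sigma k).2 | exact: (iter_rmorphism sigmai k.+1).2]. Qed.

Lemma spowB n : {morph spow n : x y / x - y}. Proof. exact: spow_zmod_morphism. Qed.
Lemma spow0 n : spow n 0 = 0. Proof. by rewrite -[0 in LHS](subrr 0) spowB subrr. Qed.
Lemma spowN n : {morph spow n : x / - x}. Proof. by move=> x; rewrite -sub0r spowB spow0 sub0r. Qed.
Lemma spowD n : {morph spow n : x y / x + y}.
Proof. by move=> x y; rewrite -{1}[y]opprK spowB spowN opprK. Qed.
Lemma spowM n : {morph spow n : x y / x * y}. Proof. exact: (spow_monoid_morphism n).2. Qed.
Lemma spow1 n : spow n 1 = 1. Proof. exact: (spow_monoid_morphism n).1. Qed.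
Lemma spow_sum n (T : Type) (s : seq T) (F : T -> R) :
  spow n (\sum_(i <- s) F i) = \sum_(i <- s) spow n (F i).
Proof. by elim: s => [|a s IH]; rewrite ?big_nil ?spow0 // !big_cons spowD IH. Qed.

Lemma spow_id x : spow 0 x = x. Proof. by []. Qed.

Lemma spow_succ n x : spow (n + 1) x = sigma (spow n x).
Proof.
case: n => [k|[|k]]; first by rewrite (_ : Posz k + 1 = Posz k.+1) //; lia.
  by rewrite /= sigmaiK.
by rewrite (_ : Negz k.+1 + 1 = Negz k) /= ?sigmaiK // !NegzE; lia.
Qed.
Lemma spow_pred n x : spow (n - 1) x = sigmai (spow n x).
Proof. by rewrite -{2}(subrK 1 n) spow_succ sigmaK. Qed.

Lemma spow_comp n m x : spow (n + m) x = spow n (spow m x).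
Proof.
case: n => k; elim: k => [|k IH].
- by rewrite add0r.
- by rewrite (_ : Posz k.+1 + m = (Posz k + m) + 1) ?spow_succ ?IH //; lia.
- by rewrite /= -spow_pred; congr spow; rewrite NegzE; lia.
- by rewrite (_ : Negz k.+1 + m = (Negz k + m) - 1) ?spow_pred ?IH // !NegzE; lia.
Qed.
Lemma spowK n : cancel (spow n) (spow (- n)).
Proof. by move=> x; rewrite -spow_comp addNr. Qed.
Lemma spowKV n : cancel (spow (- n)) (spow n).
Proof. by move=> x; rewrite -spow_comp addrN. Qed.

Lemma simg_spow n I x : simg n I (spow n x) = I x.
Proof. by rewrite /simg spowK. Qed.
Lemma simg_comp n m I x : simg (n + m) I x = simg n (simg m I) x.
Proof. by rewrite /simg -spow_comp; congr I; congr spow; lia. Qed.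

Lemma simg_ideal n I : is_ideal I -> is_ideal (simg n I).
Proof.
move=> hI; rewrite /simg; split; first by rewrite spow0; apply: ideal0.
by split=> [x y|r x]; rewrite ?spowD ?spowM; [apply: idealD | apply: idealMl].
Qed.

Lemma simg_max n I : is_max_ideal I -> is_max_ideal (simg n I).
Proof.
case=> hI [h1 hmax]; split; first exact: simg_ideal.
split=> [|K hK hIK]; first by rewrite /simg spow1.
have hIK' : incl I (simg (- n) K) by move=> x hx; rewrite /simg opprK; apply: hIK; rewrite simg_spow.
case: (hmax _ (simg_ideal (- n) hK) hIK') => [hKI|]; last by rewrite /simg spow1; right.
by left => x hx; apply: hKI; rewrite /simg opprK spowKV.
Qed.

Lemma simg_idprod n I K x : simg n (idprod I K) x <-> idprod (simg n I) (simg n K) x.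
Proof.
split=> [[s [hs e]] | [s [hs ->]]].
  exists [seq (spow n p.1, spow n p.2) | p <- s]; split.
    apply/List.Forall_forall => p /List.in_map_iff [q [<- hq]] /=.
    by rewrite !simg_spow; apply: (proj1 (List.Forall_forall _ _) hs).
  by rewrite -(spowKV n x) e spow_sum big_map; apply: eq_bigr => p _; rewrite spowM.
exists [seq (spow (- n) p.1, spow (- n) p.2) | p <- s]; split.
  apply/List.Forall_forall => p /List.in_map_iff [q [<- hq]] /=.
  exact: (proj1 (List.Forall_forall _ _) hs).
by rewrite /simg spow_sum big_map; apply: eq_bigr => p _; rewrite spowM.
Qed.

Lemma iprod_shift (F : nat -> R -> Prop) d p q :
  (forall i x, F (p + i)%N x = simg d (F i) x) -> incl (iprod F (p + q)) (simg d (iprod F q)).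
Proof.
move=> hF; elim: q => [|q IH] x; first by [].
rewrite addnS => /= hx; apply/simg_idprod.
by move: hx; apply: idprod_mono => // y; rewrite hF.
Qed.

Lemma iprod_mul (F : nat -> R -> Prop) d p q r s :
  (forall i, is_ideal (F i)) -> (forall i x, F (p + i)%N x = simg d (F i) x) ->
  iprod F p r -> simg d (iprod F q) s -> iprod F (p + q) (r * s).
Proof.
move=> F_ideal hF; elim: q r s => [|q IH] r s hr.
  by rewrite addn0 => _; apply: idealMr => //; apply: iprod_ideal.
move=> /simg_idprod hs; rewrite addnS /=.
by have := idprod_mull IH hr hs; apply: idprod_mono => // y; rewrite hF.
Qed.

Variables H J : R -> Prop.
Hypotheses (HH : is_ideal H) (HJ : is_ideal J).
Local Notation Ipow := (Ipow sigma sigmai H J).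
Local Notation FJ := (fun i : nat => simg i J).
Local Notation FH := (fun i : nat => simg (Negz i) H).

Lemma FJ_ideal i : is_ideal (FJ i). Proof. exact: simg_ideal. Qed.
Lemma FH_ideal i : is_ideal (FH i). Proof. exact: simg_ideal. Qed.

Lemma FJ_shift p i x : FJ (p + i)%N x = simg p (FJ i) x.
Proof. by rewrite -simg_comp PoszD. Qed.
Lemma FH_shift p i x : FH (p + i)%N x = simg (- p%:Z) (FH i) x.
Proof. by rewrite -simg_comp /simg; congr (H (spow _ x)); rewrite !NegzE; lia. Qed.

Lemma Ipow_pos k : Ipow (Posz k) = iprod FJ k.
Proof. by elim: k => //= k ->. Qed.
Lemma Ipow_neg k : Ipow (Negz k) = iprod FH k.+1.
Proof. by rewrite /=; elim: k.+1 => //= {}k ->. Qed.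

Lemma Ipow_ideal n : is_ideal (Ipow n).
Proof. by case: n => k; rewrite ?Ipow_pos ?Ipow_neg; apply: iprod_ideal. Qed.

Lemma Ipow_mul n m r s : Ipow n r -> Ipow m s -> Ipow (n + m) (r * spow n s).
Proof.
case: n => a; case: m => b => hr hs; rewrite ?Ipow_pos ?Ipow_neg in hr hs.
- rewrite (_ : Posz a + Posz b = Posz (a + b)) ?Ipow_pos; last by lia.
  by apply: iprod_mul hr _ => //; [exact: FJ_ideal | exact: FJ_shift | rewrite simg_spow].
- case: (leqP b.+1 a) => hab.
    rewrite (_ : Posz a + Negz b = Posz (a - b.+1)) ?Ipow_pos; last by rewrite NegzE; lia.
    by apply: idealMr; [exact: iprod_ideal | apply: iprod_mono hr; lia].
  rewrite (_ : Posz a + Negz b = Negz (b - a)) ?Ipow_neg; last by rewrite !NegzE; lia.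
  apply: idealMl; first exact: iprod_ideal.
  rewrite (_ : b.+1 = (a + (b - a).+1)%N) in hs; last by lia.
  by have := iprod_shift (FH_shift a) hs; rewrite /simg opprK.
- case: (leqP a.+1 b) => hab.
    rewrite (_ : Negz a + Posz b = Posz (b - a.+1)) ?Ipow_pos; last by rewrite NegzE; lia.
    apply: idealMl; first exact: iprod_ideal.
    rewrite (_ : b = (a.+1 + (b - a.+1))%N) in hs; last by lia.
    by have := iprod_shift (FJ_shift a.+1) hs; rewrite /simg -NegzE.
  rewrite (_ : Negz a + Posz b = Negz (a - b)) ?Ipow_neg; last by rewrite !NegzE; lia.
  by apply: idealMr; [exact: iprod_ideal | apply: iprod_mono hr; lia].
- rewrite (_ : Negz a + Negz b = Negz (a.+1 + b)) ?Ipow_neg; last by rewrite !NegzE; lia.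
  rewrite (_ : (a.+1 + b).+1 = (a.+1 + b.+1)%N); last by lia.
  apply: iprod_mul hr _ => //; [exact: FH_ideal | exact: FH_shift |].
  by rewrite NegzE -[in X in simg X](opprK (Posz a.+1)) -NegzE simg_spow.
Qed.

Lemma Ipow0 r : Ipow 0 r. Proof. by []. Qed.
Lemma Ipow1 j : J j -> Ipow 1 j.
Proof. by move=> hj; rewrite -[j]mul1r; apply: idprod_mul; rewrite // /simg spow_id. Qed.
Lemma IpowN1 h : H h -> Ipow (-1) (spow (-1) h).
Proof. by move=> hh; rewrite -[spow _ h]mul1r; apply: idprod_mul; rewrite // /simg spowK. Qed.

Variable m0 : R -> Prop.
Hypotheses (Hm0 : is_max_ideal m0) (Hinf : orbit_infinite sigma sigmai m0).
Local Notation orb := (orb sigma sigmai m0).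
Local Notation brk := (brk sigma sigmai H J m0).

Lemma orb_max a : is_max_ideal (orb a). Proof. exact: simg_max. Qed.
Lemma orb_ideal a : is_ideal (orb a). Proof. by case: (orb_max a). Qed.
Lemma orb_prime a : is_prime_ideal (orb a). Proof. exact/max_ideal_prime/orb_max. Qed.
Lemma orb0 a : orb a 0. Proof. exact: ideal0 (orb_ideal a). Qed.
Lemma orb_neq1 a : ~ orb a 1. Proof. by case: (orb_max a) => _ []. Qed.
Lemma orb_mul a x y : orb a (x * y) -> orb a x \/ orb a y.
Proof. by case: (orb_prime a) => _ [_]; apply. Qed.

Lemma orb_spow a k y : orb (a + k) (spow k y) = orb a y.
Proof. by rewrite /Defs.orb /simg -spow_comp; congr (m0 (spow _ y)); lia. Qed.
Lemma orb_spowV a k x : orb (a + k) x = orb a (spow (- k) x).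
Proof. by rewrite -{1}(spowKV k x) orb_spow. Qed.

Lemma orb_periodic p : (forall c, orb (c + p) = orb c) -> forall q c, orb (c + q * p) = orb c.
Proof.
move=> hp; elim/int_rec => [|k IH|k IH] c; first by rewrite mul0r addr0.
  by rewrite -(IH c) -(hp (c + k%:Z * p)); congr orb; rewrite intS; ring.
by rewrite -(IH c) -(hp (c + - k.+1%:Z * p)); congr orb; rewrite intS; ring.
Qed.

Lemma orb_inj : injective orb.
Proof.
move=> a b E; have [//|nab] := eqVneq a b; exfalso.
have hp c : orb (c + (b - a)) = orb c.
  apply: funext => x; rewrite (_ : c + (b - a) = b + (c - a)); last by lia.
  by rewrite orb_spowV -E -orb_spowV; congr orb; lia.
have p0 : b - a != 0 by rewrite subr_eq0 eq_sym.
apply: Hinf; exists (List.map (fun i : nat => orb i) (List.seq 0 `|b - a|)) => c.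
apply/List.in_map_iff; exists `|(c %% (b - a))%Z|%N; split.
  by rewrite gez0_abs ?modz_ge0 // {2}(divz_eq c (b - a)) [in RHS]addrC orb_periodic.
by apply/List.in_seq; have := ltz_mod c p0; have := modz_ge0 c p0; lia.
Qed.

Lemma orb_separate a b : a != b -> exists x, orb a x /\ ~ orb b x.
Proof.
move=> nab; apply: contrapT => hno; move/eqP: nab; apply; apply: orb_inj.
apply: max_ideal_eq (orb_max a) (orb_ideal b) (@orb_neq1 b) _ => x hx.
by apply: contrapT => nx; apply: hno; exists x.
Qed.

Lemma orb_isolate a (L : seq int) : exists q, ~ orb a q /\ forall b, b \in L -> b != a -> orb b q.
Proof.
elim: L => [|b L [q [hq hL]]]; first by exists 1; split => //; exact: orb_neq1.
have [->|nba] := eqVneq b a.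
  exists q; split => // b'; rewrite in_cons => /orP [/eqP ->|]; [by rewrite eqxx | exact: hL].
have [y [hy ny]] := orb_separate nba.
exists (q * y); split; first by case/orb_mul.
move=> b'; rewrite in_cons => /orP [/eqP -> _|h nb]; first exact: idealMl (orb_ideal b) hy.
exact: idealMr (orb_ideal b') (hL b' h nb).
Qed.

Lemma brk_HJ a h j : brk a -> H h -> J j -> orb (a + 1) (h * j).
Proof.
case=> _ hHJ hh hj; have := hHJ _ (idprod_mul hh hj).
by rewrite /Defs.orb -simg_comp addrC.
Qed.

Lemma not_brk_HJ a : ~ brk a -> exists x, [/\ H x, J x & ~ orb (a + 1) x].
Proof.
move=> nb; apply: contrapT => hno; apply: nb; split.
  by apply/max_ideal_prime/simg_max/orb_max.
move=> x hx; rewrite /Defs.orb -simg_comp addrC; apply: contrapT => nx; apply: hno.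
by exists x; split => //; [exact: idprod_subl hx | exact: idprod_subr hx].
Qed.

Lemma orb_brk_shift c0 c x h j : brk c0 -> H h -> J j -> spow (c0 + 1 - c) x = h * j -> orb c x.
Proof.
move=> hb hh hj e; rewrite -(orb_spow c (c0 + 1 - c)) e (_ : c + _ = c0 + 1); last by lia.
exact: brk_HJ.
Qed.

Lemma orb_Ipow_mul_below c0 a m n r s : brk c0 -> a + m <= c0 < a -> c0 < a + m + n ->
  Ipow n r -> Ipow m s -> orb (a + m + n) (r * spow n s).
Proof.
move=> hb /andP [hbm hma] hc; case: m hbm hma hc => mm hbm hma hc; first by lia.
case: n hc => nn hc; last by rewrite !NegzE in hc hbm; lia.
rewrite Ipow_pos Ipow_neg => hr hs; rewrite NegzE in hbm hma hc.
have [ll ell] : exists k : nat, c0 - (a - mm.+1%:Z) = k by apply: ge0_Posz; lia.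
have [ee eee] : exists k : nat, a - mm.+1%:Z + nn%:Z - c0 - 1 = k by apply: ge0_Posz; lia.
have hH : FH ll s by apply: (iprod_factor (F := FH) FH_ideal) hs _; lia.
have hJ : FJ ee r by apply: (iprod_factor (F := FJ) FJ_ideal) hr _; lia.
apply: (orb_brk_shift hb hH hJ).
by rewrite spowM -spow_comp mulrC; congr (spow _ s * spow _ r); rewrite ?NegzE; lia.
Qed.

Lemma orb_Ipow_mul_above b0 a m n r s : brk b0 -> a <= b0 < a + m -> a + m + n <= b0 ->
  Ipow n r -> Ipow m s -> orb (a + m + n) (r * spow n s).
Proof.
move=> hb /andP [hab hbm] hc; case: m hbm hab hc => mm hbm hab hc; last by rewrite NegzE in hbm; lia.
case: n hc => nn hc; first by lia.
rewrite Ipow_pos Ipow_neg => hr hs; rewrite NegzE in hc.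
have [ii eii] : exists k : nat, b0 - (a + mm%:Z - nn.+1%:Z) = k by apply: ge0_Posz; lia.
have [jj ejj] : exists k : nat, a + mm%:Z - b0 - 1 = k by apply: ge0_Posz; lia.
have hH : FH ii r by apply: (iprod_factor (F := FH) FH_ideal) hr _; lia.
have hJ : FJ jj s by apply: (iprod_factor (F := FJ) FJ_ideal) hs _; lia.
apply: (orb_brk_shift hb hH hJ).
by rewrite spowM -spow_comp; congr (spow _ r * spow _ s); rewrite ?NegzE; lia.
Qed.

(* Leaving (lo, hi] through a boundary break b and coming back forces the
   coefficient through a factor h j with h in H and j in J, and h j lies in
   sigma^(b+1)(m0). *)
Lemma orb_Ipow_mul_outside lo hi a m n r s :
  (forall c, lo = Some c -> brk c) -> (forall b, hi = Some b -> brk b) ->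
  inI lo hi a -> ~~ inI lo hi (a + m) -> inI lo hi (a + m + n) ->
  Ipow n r -> Ipow m s -> orb (a + m + n) (r * spow n s).
Proof.
move=> Hlo Hhi ha hb hc.
have [[c0 [elo /andP [hc0 hc0']]] | [b0 [ehi /andP [hb0 hb0']]]] :
    (exists c0, lo = Some c0 /\ (a + m <= c0 < a) && (c0 < a + m + n)) \/
    (exists b0, hi = Some b0 /\ (a <= b0 < a + m) && (a + m + n <= b0)).
  move: ha hb hc; rewrite /inI; case: lo {Hlo} => [c0|]; case: hi {Hhi} => [b0|] //= h1 h2 h3.
  - by have [hm|hm] := lerP (a + m) c0; [left; exists c0 | right; exists b0]; split => //; lia.
  - by left; exists c0; split => //; lia.
  - by right; exists b0; split => //; lia.
- exact: orb_Ipow_mul_below (Hlo _ elo) hc0 hc0'.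
- exact: orb_Ipow_mul_above (Hhi _ ehi) hb0 hb0'.
Qed.

(** * The modules M(O, n) *)

Section IntervalModule.
Variables lo hi : option int.
Local Notation I := (inI lo hi).
Local Notation MI := (MI sigma sigmai m0 lo hi).
Local Notation cls := (cls sigma sigmai m0 lo hi).
Local Notation rep := (rep (sigma:=sigma) (sigmai:=sigmai) (m0:=m0) (lo:=lo) (hi:=hi)).
Local Notation reln := (reln sigma sigmai m0 lo hi).
Local Notation rawact := (rawact sigma sigmai lo hi).
Local Notation wspace := (@wspace _ MI).

Lemma rawact_cons k r p x :
  rawact k r (p :: x) = if I p.1 then (p.1 + k, r * spow k p.2) :: rawact k r x else rawact k r x.
Proof. by rewrite /Defs.rawact /=; case: ifP. Qed.
Lemma rawact_cat k r x y : rawact k r (x ++ y) = rawact k r x ++ rawact k r y.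
Proof. by rewrite /Defs.rawact filter_cat map_cat. Qed.

Lemma coef_rawact k r x a :
  coef (rawact k r x) a = if I (a - k) then r * spow k (coef x (a - k)) else 0.
Proof.
elim: x => [|p x IH]; first by rewrite /Defs.rawact !coef_nil; case: ifP; rewrite // spow0 mulr0.
have E : (p.1 + k == a) = (p.1 == a - k) by apply/eqP/eqP; lia.
rewrite rawact_cons coef_cons; case: ifP => hp; rewrite ?coef_cons IH /= ?E; case: eqP => [e|_];
  by rewrite ?add0r // -?e ?hp // spowD mulrDr.
Qed.

Lemma reln_coef x y : (forall a, I a -> coef x a = coef y a) -> reln x y.
Proof. by move=> h a ha; rewrite h // subrr; apply: orb0. Qed.
Lemma reln_refl x : reln x x. Proof. exact: reln_coef. Qed.
Lemma reln_sym x y : reln x y -> reln y x.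
Proof. by move=> h a ha; rewrite -opprB; apply: idealN (orb_ideal a) (h a ha). Qed.
Lemma reln_trans x y z : reln x y -> reln y z -> reln x z.
Proof.
move=> h1 h2 a ha; rewrite (_ : coef x a - coef z a = (coef x a - coef y a) + (coef y a - coef z a));
  [exact: idealD (orb_ideal a) (h1 a ha) (h2 a ha) | ring].
Qed.

Lemma cls_eqP x y : cls x = cls y <-> reln x y.
Proof.
split=> [/(congr1 (@proj1_sig _ _)) /= -> | h]; first exact: reln_refl.
apply: eq_exist; apply: funext => z; apply: propext.
by split; [apply: reln_trans (reln_sym h) | apply: reln_trans h].
Qed.
Lemma clsK u : cls (rep u) = u.
Proof.
case: u => S pS; rewrite /Defs.rep /=.
by case: (ClassicalEpsilon.constructive_indefinite_description _ _) => x e /=; apply: eq_exist.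
Qed.
Lemma rep_cls x : reln (rep (cls x)) x.
Proof. by apply/cls_eqP; rewrite clsK. Qed.

Lemma cls_eq0 x : cls x = mzero MI <-> forall a, I a -> orb a (coef x a).
Proof.
split=> [/cls_eqP h a ha | h]; first by have := h a ha; rewrite coef_nil subr0.
by apply/cls_eqP => a ha; rewrite coef_nil subr0; apply: h.
Qed.

Lemma reln_cat x x' y y' : reln x x' -> reln y y' -> reln (x ++ y) (x' ++ y').
Proof.
move=> h1 h2 a ha; rewrite !coef_cat.
rewrite (_ : _ - _ = (coef x a - coef x' a) + (coef y a - coef y' a)); last by ring.
exact: idealD (orb_ideal a) (h1 a ha) (h2 a ha).
Qed.
Lemma reln_opp x x' : reln x x' -> reln [seq (p.1, - p.2) | p <- x] [seq (p.1, - p.2) | p <- x'].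
Proof. by move=> h a ha; rewrite !coef_opp -opprD; apply: idealN (orb_ideal a) (h a ha). Qed.
Lemma reln_rawact k r x x' : reln x x' -> reln (rawact k r x) (rawact k r x').
Proof.
move=> h a ha; rewrite !coef_rawact; case: ifP => hk; last by rewrite subrr; apply: orb0.
rewrite -mulrBr -spowB; apply: idealMl (orb_ideal a) _.
by have := h _ hk; rewrite -(orb_spow _ k) subrK.
Qed.

Lemma madd_cls x y : @madd _ MI (cls x) (cls y) = cls (x ++ y).
Proof. by apply/cls_eqP; apply: reln_cat; apply: rep_cls. Qed.
Lemma mopp_cls x : @mopp _ MI (cls x) = cls [seq (p.1, - p.2) | p <- x].
Proof. by apply/cls_eqP; apply: reln_opp; apply: rep_cls. Qed.
Lemma mact_cls k r x : @mact _ MI k r (cls x) = cls (rawact k r x).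
Proof. by apply/cls_eqP; apply: reln_rawact; apply: rep_cls. Qed.
Lemma mzero_cls : mzero MI = cls [::]. Proof. by []. Qed.

Lemma msum_cls (xs : seq (seq (int * R))) : @msum _ MI (List.map cls xs) = cls (flatten xs).
Proof. by elim: xs => [|y xs IH] //; rewrite (_ : flatten _ = y ++ flatten xs) // -madd_cls -IH. Qed.

Lemma cls_ind (P : mcar MI -> Prop) : (forall x, P (cls x)) -> forall u, P u.
Proof. by move=> hP u; rewrite -(clsK u). Qed.

Section Action.
Hypotheses (Hlo : forall c, lo = Some c -> brk c) (Hhi : forall b, hi = Some b -> brk b).

Lemma MI_mactA n m r s u : Ipow n r -> Ipow m s ->
  @mact _ MI n r (@mact _ MI m s u) = @mact _ MI (n + m) (r * spow n s) u.
Proof.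
move=> hr hs; elim/cls_ind: u => x; rewrite !mact_cls; apply/cls_eqP => c hc.
rewrite !coef_rawact (_ : c - (n + m) = c - n - m); last by lia.
case: (boolP (I (c - n))) => h1; case: (boolP (I (c - n - m))) => h2.
- by rewrite spowM -spow_comp mulrA subrr; apply: orb0.
- by rewrite spow0 mulr0 subrr; apply: orb0.
- rewrite sub0r; apply: idealN (orb_ideal c) _; apply: idealMr (orb_ideal c) _.
  by have := orb_Ipow_mul_outside Hlo Hhi h2 _ _ hr hs; rewrite !subrK; apply.
- by rewrite subrr; apply: orb0.
Qed.

Lemma MI_bmod : is_bmod sigma sigmai H J MI.
Proof.
split; first by do 3!elim/cls_ind => ?; rewrite !madd_cls catA.
split; first by do 2!elim/cls_ind => ?; rewrite !madd_cls; apply/cls_eqP;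
  apply: reln_coef => a _; rewrite !coef_cat addrC.
split; first by elim/cls_ind => x; rewrite mzero_cls madd_cls.
split; first by elim/cls_ind => x; rewrite mopp_cls madd_cls; apply/cls_eq0 => a _;
  rewrite coef_cat coef_opp addNr; apply: orb0.
split; first by move=> n r u v _; elim/cls_ind: u => x; elim/cls_ind: v => y;
  rewrite madd_cls !mact_cls madd_cls rawact_cat.
split.
  move=> n r s u _ _; elim/cls_ind: u => x; rewrite !mact_cls madd_cls.
  apply/cls_eqP; apply: reln_coef => a _; rewrite coef_cat !coef_rawact.
  by case: ifP; rewrite ?addr0 // mulrDl.
split; first exact: MI_mactA.
by elim/cls_ind => x; rewrite mact_cls; apply/cls_eqP; apply: reln_coef => a ha;
  rewrite coef_rawact subr0 ha mul1r.
Qed.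
End Action.

Lemma rep_eq0 v : v = mzero MI <-> forall a, I a -> orb a (coef (rep v) a).
Proof. by rewrite -{1}(clsK v); apply: cls_eq0. Qed.

Lemma msum_eq0 (T : Type) (s : list (T * mcar MI)) :
  msum (List.map snd s) = mzero MI <-> forall a, I a -> orb a (\sum_(p <- s) coef (rep p.2) a).
Proof.
have -> : List.map snd s = List.map cls [seq rep p.2 | p <- s] by elim: s => //= p s ->; rewrite clsK.
by rewrite msum_cls cls_eq0; split=> h a ha; have := h a ha; rewrite coef_flatten big_map.
Qed.

Lemma wspace_seq1 a c : wspace (orb a) (cls [:: (a, c)]).
Proof.
move=> q hq; rewrite mact_cls; apply/cls_eq0 => b hb.
rewrite coef_rawact subr0 hb coef_seq1 spow_id.
case: eqP => [<- | _]; first exact: idealMr (orb_ideal a) hq.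
by rewrite mulr0; apply: orb0.
Qed.

Lemma wspace_coef_orb (m : R -> Prop) x a : is_max_ideal m -> wspace m (cls x) -> I a ->
  ~ orb a (coef x a) -> m = orb a.
Proof.
move=> hm hw ha hn; apply: max_ideal_eq hm (orb_ideal a) (@orb_neq1 a) _ => q hq.
have := hw q hq; rewrite mact_cls => /cls_eq0 /(_ a ha).
by rewrite coef_rawact subr0 ha spow_id => /orb_mul [].
Qed.

Lemma MI_weight_span v : exists s : list ((R -> Prop) * mcar MI),
  List.Forall (fun p => is_max_ideal p.1 /\ wspace p.1 p.2) s /\ v = msum (List.map snd s).
Proof.
elim/cls_ind: v => x; set L := undup (map fst x).
exists (List.map (fun a => (orb a, cls [:: (a, coef x a)])) L); split.
  apply/List.Forall_forall => p /List.in_map_iff [a [<- _]].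
  by split; [exact: orb_max | exact: wspace_seq1].
rewrite List.map_map -(List.map_map (fun a => [:: (a, coef x a)]) cls) msum_cls.
apply/cls_eqP; apply: reln_coef => a _; rewrite coef_flatten List_mapE big_map.
under eq_bigr do rewrite coef_seq1.
by rewrite sum_pick ?undup_uniq // mem_undup; case: ifP => // /negbT /coef_notin.
Qed.

Lemma MI_weight_indep (s : list ((R -> Prop) * mcar MI)) :
  List.NoDup (List.map fst s) -> List.Forall (fun p => is_max_ideal p.1 /\ wspace p.1 p.2) s ->
  msum (List.map snd s) = mzero MI -> List.Forall (fun p => p.2 = mzero MI) s.
Proof.
elim: s => [|[m v] s IH] // /List.NoDup_cons_iff [hm hnd].
move=> /List.Forall_cons_iff [[hmax hw] hF] /msum_eq0 hsum.
have hw' : wspace m (cls (rep v)) by rewrite clsK.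
have hrest a : I a -> m = orb a -> orb a (\sum_(p <- s) coef (rep p.2) a).
  move=> ha ema; apply: ideal_sum (orb_ideal a) _ => -[m' v'] hin /=.
  have [hmax' hw''] := proj1 (List.Forall_forall _ s) hF _ hin.
  apply: contrapT => hn; apply: hm; rewrite ema -(wspace_coef_orb hmax' _ ha hn) ?clsK //.
  exact: List.in_map fst _ _ hin.
have hv a : I a -> orb a (coef (rep v) a).
  move=> ha; apply: contrapT => hn; have ema := wspace_coef_orb hmax hw' ha hn.
  apply: hn; rewrite -(addrK (\sum_(p <- s) coef (rep p.2) a) (coef (rep v) a)).
  by apply: idealB (orb_ideal a) _ (hrest a ha ema); have := hsum a ha; rewrite big_cons.
constructor; first exact/rep_eq0.
apply: IH => //; apply/msum_eq0 => a ha.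
rewrite -(addKr (coef (rep v) a) (\sum_(p <- s) coef (rep p.2) a)).
by apply: idealD (orb_ideal a) (idealN (orb_ideal a) (hv a ha)) _; have := hsum a ha; rewrite big_cons.
Qed.

Lemma MI_weight_fin (m : R -> Prop) : is_max_ideal m -> exists bs : list (mcar MI),
  List.Forall (wspace m) bs /\ forall v, wspace m v -> exists cs : list R,
    List.length cs = List.length bs /\
    v = msum (List.map (fun p => @mact _ MI 0 p.1 p.2) (List.combine cs bs)).
Proof.
move=> hm; case: (pselect (exists a, I a /\ m = orb a)) => [[a [ha ->]] | hno].
  exists [:: cls [:: (a, 1)]]; split; first by constructor => //; exact: wspace_seq1.
  move=> v hv; elim/cls_ind: v hv => x hx; exists [:: coef x a]; split => //.
  rewrite (_ : msum _ = @madd _ MI (@mact _ MI 0 (coef x a) (cls [:: (a, 1)])) (mzero MI)) //.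
  rewrite mact_cls mzero_cls madd_cls; apply/cls_eqP => b hb.
  rewrite coef_cat coef_nil addr0 coef_rawact subr0 hb coef_seq1 spow_id.
  case: eqP => [<- | nab]; first by rewrite mulr1 subrr; apply: orb0.
  rewrite mulr0 subr0; apply: contrapT => hn; apply: nab; apply: orb_inj.
  exact: wspace_coef_orb (orb_max a) hx hb hn.
exists [::]; split => // v hv; exists [::]; split => //=; apply/rep_eq0 => a ha.
apply: contrapT => hn; apply: hno; exists a; split => //.
by apply: wspace_coef_orb hm _ ha hn; rewrite clsK.
Qed.

Lemma MI_weight : is_weight MI.
Proof. by split; [exact: MI_weight_span | split; [exact: MI_weight_indep | exact: MI_weight_fin]]. Qed.

Hypothesis Hin : forall a, I a -> I (a + 1) -> ~ brk a.

Section Submodule.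
Variable N : mcar MI -> Prop.
Hypothesis hN : is_submod sigma sigmai H J N.

Lemma submod_add u v : N u -> N v -> N (madd u v). Proof. by case: hN => _ [+ _]; apply. Qed.
Lemma submod_act n r u : Ipow n r -> N u -> N (@mact _ MI n r u).
Proof. by case: hN => _ [_ [_]]; apply. Qed.

Lemma submod_seq1_unit b c : I b -> ~ orb b c -> N (cls [:: (b, c)]) -> N (cls [:: (b, 1)]).
Proof.
move=> hb hc hNc; have [d hd] := max_ideal_inv (orb_max b) hc.
have := submod_act (Ipow0 d) hNc; rewrite mact_cls.
congr N; apply/cls_eqP => a ha; rewrite coef_rawact subr0 ha !coef_seq1 spow_id.
by case: eqP => [<- // | _]; rewrite mulr0 subr0; apply: orb0.
Qed.

Lemma submod_seq1_exists u : N u -> u <> mzero MI -> exists a, I a /\ N (cls [:: (a, 1)]).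
Proof.
elim/cls_ind: u => x hNx nx.
have [a [ha na]] : exists a, I a /\ ~ orb a (coef x a).
  by apply: contrapT => hno; apply/nx/cls_eq0 => a ha; apply: contrapT => hn; apply: hno; exists a.
have [q [hq hqL]] := orb_isolate a (map fst x).
exists a; split => //; apply: (submod_seq1_unit (c := q * coef x a)) => //; first by case/orb_mul.
have := submod_act (Ipow0 q) hNx; rewrite mact_cls.
congr N; apply/cls_eqP => b hb; rewrite coef_rawact subr0 hb spow_id coef_seq1.
have [<- | nab] := eqVneq a b; first by rewrite subrr; apply: orb0.
rewrite subr0; have [hin | hnin] := boolP (b \in map fst x).
  by apply: idealMr (orb_ideal b) (hqL b hin _); rewrite eq_sym.
by rewrite coef_notin // mulr0; apply: orb0.
Qed.

Lemma submod_seq1_succ b : I b -> I (b + 1) -> N (cls [:: (b, 1)]) -> N (cls [:: (b + 1, 1)]).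
Proof.
move=> hb hb1 hNb; have [j [_ hj nj]] := not_brk_HJ (Hin hb hb1).
apply: (submod_seq1_unit (c := j)) => //.
by have := submod_act (Ipow1 hj) hNb; rewrite mact_cls rawact_cons hb spow1 mulr1.
Qed.

Lemma submod_seq1_pred b : I b -> I (b + 1) -> N (cls [:: (b + 1, 1)]) -> N (cls [:: (b, 1)]).
Proof.
move=> hb hb1 hNb; have [h [hh _ nh]] := not_brk_HJ (Hin hb hb1).
apply: (submod_seq1_unit (c := spow (-1) h)) => //; first by rewrite -orb_spowV.
by have := submod_act (IpowN1 hh) hNb; rewrite mact_cls rawact_cons hb1 spow1 mulr1 addrK.
Qed.

Lemma submod_seq1_up a (k : nat) :
  I a -> I (a + k%:Z) -> N (cls [:: (a, 1)]) -> N (cls [:: (a + k%:Z, 1)]).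
Proof.
move=> ha; elim: k => [|k IH] hk hNa; first by rewrite addr0.
have hk' : I (a + k%:Z) by apply: inI_between ha hk _; lia.
rewrite (_ : a + k.+1%:Z = a + k%:Z + 1) in hk *; last by lia.
exact: submod_seq1_succ hk' hk (IH hk' hNa).
Qed.

Lemma submod_seq1_down a (k : nat) :
  I a -> I (a - k%:Z) -> N (cls [:: (a, 1)]) -> N (cls [:: (a - k%:Z, 1)]).
Proof.
move=> ha; elim: k => [|k IH] hk hNa; first by rewrite subr0.
have hk' : I (a - k%:Z) by apply: inI_between hk ha _; lia.
rewrite (_ : a - k%:Z = a - k.+1%:Z + 1) in hk' IH; last by lia.
exact: submod_seq1_pred hk hk' (IH hk' hNa).
Qed.

Lemma submod_seq1_all a : I a -> N (cls [:: (a, 1)]) -> forall b, I b -> N (cls [:: (b, 1)]).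
Proof.
move=> ha hNa b hb; have [hab | hab] := lerP a b.
  have [k ek] : exists k : nat, b - a = k by apply: ge0_Posz; lia.
  by rewrite (_ : b = a + k%:Z) in hb *; [exact: submod_seq1_up | lia].
have [k ek] : exists k : nat, a - b = k by apply: ge0_Posz; lia.
by rewrite (_ : b = a - k%:Z) in hb *; [exact: submod_seq1_down | lia].
Qed.

Lemma submod_full : (forall b, I b -> N (cls [:: (b, 1)])) -> forall u, N u.
Proof.
move=> hseq1; elim/cls_ind => x; elim: x => [|[b c] x IH]; first by case: hN.
rewrite -cat1s -madd_cls; apply: submod_add IH.
have [hb | hb] := boolP (I b).
  have := submod_act (Ipow0 c) (hseq1 b hb); rewrite mact_cls.
  congr N; apply/cls_eqP => a ha; rewrite coef_rawact subr0 ha spow_id !coef_seq1.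
  by case: eqP => _; rewrite ?mulr1 ?mulr0 subrr; apply: orb0.
rewrite (_ : cls _ = mzero MI); first by case: hN.
by apply/cls_eq0 => a ha; rewrite coef_seq1; case: eqP => [e | _]; [rewrite e ha in hb | apply: orb0].
Qed.
End Submodule.

Lemma MI_simple : (exists a, I a) -> is_simple sigma sigmai H J MI.
Proof.
move=> [a ha]; split.
  by exists (cls [:: (a, 1)]) => /cls_eq0 /(_ a ha); rewrite coef_seq1 eqxx; apply: orb_neq1.
move=> N hN; case: (pselect (exists u, N u /\ u <> mzero MI)) => [[u [hu nu]] | hno]; [right | left].
  have [b [hb hNb]] := submod_seq1_exists hN hu nu.
  exact: submod_full hN (submod_seq1_all hN hb hNb).
by move=> x hx; apply: contrapT => nx; apply: hno; exists x.
Qed.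
End IntervalModule.

(** * Simple weight modules supported on the orbit *)

Section AbstractModule.
Variable M : bmod R.
Hypothesis HM : is_bmod sigma sigmai H J M.

Definition mtype := mcar M.
HB.instance Definition _ := gen_eqMixin mtype.
HB.instance Definition _ := gen_choiceMixin mtype.
Lemma mtype_addA : associative (@madd R M : mtype -> mtype -> mtype).
Proof. by case: HM. Qed.
Lemma mtype_addC : commutative (@madd R M : mtype -> mtype -> mtype).
Proof. by case: HM => _ []. Qed.
Lemma mtype_add0 : left_id (mzero M : mtype) (@madd R M).
Proof. by case: HM => _ [] _ []. Qed.
Lemma mtype_addN : left_inverse (mzero M : mtype) (@mopp R M) (@madd R M).
Proof. by case: HM => _ [] _ [] _ []. Qed.
HB.instance Definition _ := GRing.isZmodule.Build mtype mtype_addA mtype_addC mtype_add0 mtype_addN.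

Local Notation act n r x := (@mact R M n r x : mtype).
Local Notation wspace m x := (@wspace R M m (x : mtype)).

Lemma actD n r (x y : mtype) : Ipow n r -> act n r (x + y) = act n r x + act n r y.
Proof. by case: HM => _ [] _ [] _ [] _ [] + _; apply. Qed.
Lemma actDr n r s (x : mtype) : Ipow n r -> Ipow n s -> act n (r + s) x = act n r x + act n s x.
Proof. by case: HM => _ [] _ [] _ [] _ [] _ [] + _; apply. Qed.
Lemma actA n m r s (x : mtype) : Ipow n r -> Ipow m s ->
  act n r (act m s x) = act (n + m) (r * spow n s) x.
Proof. by case: HM => _ [] _ [] _ [] _ [] _ [] _ [] + _; apply. Qed.
Lemma act1 (x : mtype) : act 0 1 x = x.
Proof. by case: HM => _ [] _ [] _ [] _ [] _ [] _ []. Qed.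

Lemma act0 n r : Ipow n r -> act n r (0 : mtype) = 0.
Proof. by move=> hr; apply: (@addrI _ (act n r (0 : mtype))); rewrite -actD // !addr0. Qed.
Lemma act0r n (x : mtype) : act n 0 x = 0.
Proof. by apply: (addrI (act n 0 x)); rewrite -actDr ?addr0 //; apply: ideal0 (Ipow_ideal n). Qed.
Lemma actNr n r (x : mtype) : Ipow n r -> act n (- r) x = - act n r x.
Proof.
move=> hr; apply: (@addrI _ (act n r x)).
by rewrite -actDr ?addrN ?act0r //; apply: idealN (Ipow_ideal n) hr.
Qed.
Lemma actBr n r s (x : mtype) : Ipow n r -> Ipow n s -> act n (r - s) x = act n r x - act n s x.
Proof. by move=> hr hs; rewrite actDr ?actNr //; apply: idealN (Ipow_ideal n) hs. Qed.
Lemma actN n r (x : mtype) : Ipow n r -> act n r (- x) = - act n r x.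
Proof. by move=> hr; apply: (@addIr _ (act n r x)); rewrite -actD // !addNr act0. Qed.
Lemma act_sum n r (T : Type) (l : seq T) (F : T -> mtype) : Ipow n r ->
  act n r (\sum_(i <- l) F i) = \sum_(i <- l) act n r (F i).
Proof. by move=> hr; elim: l => [|a l IH]; rewrite ?big_nil ?act0 // !big_cons actD // IH. Qed.
Lemma act_sumr n (T : eqType) (l : seq T) (F : T -> R) (x : mtype) :
  (forall i, i \in l -> Ipow n (F i)) -> act n (\sum_(i <- l) F i) x = \sum_(i <- l) act n (F i) x.
Proof.
elim: l => [|a l IH] hF; first by rewrite !big_nil act0r.
have hF' i : i \in l -> Ipow n (F i) by move=> hi; apply: hF; rewrite in_cons hi orbT.
rewrite !big_cons actDr ?(IH hF') //; first by apply: hF; rewrite mem_head.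
rewrite big_seq; apply: big_ind => [|y z|i /hF'] //.
  exact: ideal0 (Ipow_ideal n).
exact: idealD (Ipow_ideal n).
Qed.

Lemma wspace0 (m : R -> Prop) : wspace m 0.
Proof. by move=> q hq; rewrite act0. Qed.
Lemma wspaceD (m : R -> Prop) (x y : mtype) : wspace m x -> wspace m y -> wspace m (x + y).
Proof. by move=> hx hy q hq; rewrite actD // hx // hy // addr0. Qed.
Lemma wspaceN (m : R -> Prop) (x : mtype) : wspace m x -> wspace m (- x).
Proof. by move=> hx q hq; rewrite actN // hx // oppr0. Qed.

Lemma wspace_act c n s (y : mtype) : wspace (orb c) y -> Ipow n s -> wspace (orb (c + n)) (act n s y).
Proof.
move=> hy hs q hq; rewrite actA // add0r spow_id mulrC.
have hq' : orb c (spow (- n) q) by rewrite -orb_spowV.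
have := actA y hs (Ipow0 (spow (- n) q)).
by rewrite addr0 spowKV => <-; rewrite hy // act0.
Qed.

Lemma wspace_eq0 (m : R -> Prop) e (y : mtype) :
  is_max_ideal m -> wspace m y -> ~ m e -> act 0 e y = 0 -> y = 0.
Proof.
move=> hm hy he h; have [d hd] := max_ideal_inv hm he.
rewrite -[y]act1 (_ : 1 = d * e - (d * e - 1)); last by ring.
by rewrite actBr // -(spow_id e) -(add0r 0) -actA // h act0 // hy // subrr.
Qed.

Lemma msumE (l : seq mtype) : msum l = \sum_(x <- l) x.
Proof. by elim: l => [|x l IH]; rewrite ?big_nil // big_cons -IH. Qed.

Hypothesis HW : is_weight M.

Lemma wspace_sum_eq0 (l : seq (int * mtype)) : (forall p, p \in l -> wspace (orb p.1) p.2) ->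
  \sum_(p <- l) p.2 = 0 -> forall c, \sum_(p <- l | p.1 == c) p.2 = 0.
Proof.
move=> hl hsum c; have [_ [hindep _]] := HW.
pose L := undup (map fst l).
pose s := List.map (fun c => (orb c, \sum_(p <- l | p.1 == c) p.2 : mtype)) L.
have hnd : List.NoDup (List.map fst s).
  by rewrite List.map_map; apply: NoDup_map_inj orb_inj (undup_uniq _).
have hF : List.Forall (fun p => is_max_ideal p.1 /\ Defs.wspace p.1 p.2) s.
  apply/List.Forall_forall => p /List.in_map_iff [c' [<- _]]; split; first exact: orb_max.
  rewrite /= big_seq_cond; apply: big_ind => [|x y|q /andP [hq /eqP <-]];
    [exact: wspace0 | exact: wspaceD | exact: hl].
have hs : msum (List.map snd s) = mzero M.
  by rewrite msumE List.map_map List_mapE big_map partition_sum hsum.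
have /List.Forall_forall hz := hindep s hnd hF hs.
case: (boolP (c \in L)) => hc.
  by apply: (hz (orb c, _)); apply/List.in_map_iff; exists c; split => //; apply/List_InP.
rewrite big_seq_cond big1 // => p /andP [hp /eqP e].
by rewrite -e mem_undup map_f in hc.
Qed.

Definition span (y : mtype) (x : mcar M) := exists l : seq (int * R),
  (forall p, p \in l -> Ipow p.1 p.2) /\ (x : mtype) = \sum_(p <- l) act p.1 p.2 y.

Lemma span_submod y : is_submod sigma sigmai H J (span y).
Proof.
split; first by exists [::]; rewrite big_nil.
split=> [x1 x2 [l1 [h1 e1]] [l2 [h2 e2]] | ].
  exists (l1 ++ l2); split; last by rewrite big_cat -e1 -e2.
  by move=> p; rewrite mem_cat => /orP [/h1 | /h2].
split=> [x1 [l1 [h1 e1]] | n r x1 hr [l1 [h1 e1]]].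
  exists [seq (p.1, - p.2) | p <- l1]; split.
    by move=> p /mapP [q hq ->]; apply: idealN (Ipow_ideal _) (h1 q hq).
  rewrite big_map -[mopp _]/(- (x1 : mtype)) e1 -sumrN; apply: eq_big_seq => p hp /=.
  by rewrite actNr //; apply: h1.
exists [seq (n + p.1, r * spow n p.2) | p <- l1]; split.
  by move=> p /mapP [q hq ->]; apply: Ipow_mul hr (h1 q hq).
by rewrite big_map e1 act_sum //; apply: eq_big_seq => p hp /=; rewrite actA //; apply: h1.
Qed.

Hypothesis HS : is_simple sigma sigmai H J M.

Lemma simple_span (y : mtype) : y <> 0 -> forall x, span y x.
Proof.
move=> ny; have Ny : span y y.
  by exists [:: (0, 1)]; split; [move=> p; rewrite inE => /eqP -> | rewrite big_seq1 act1].
by case: (proj2 HS _ (span_submod y)) => [/(_ y Ny) | ].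
Qed.

Lemma span_wspace_homog a n (y z : mtype) : wspace (orb (a + n)) y -> wspace (orb a) z ->
  span y z -> exists2 s, Ipow (- n) s & z = act (- n) s y.
Proof.
move=> hy hz [l [hl ez]].
have hsel p : p \in l -> Ipow (- n) (if a + n + p.1 == a then p.2 else 0).
  move=> hp; case: eqP => [e | _]; last exact: ideal0 (Ipow_ideal _).
  by rewrite (_ : - n = p.1); [exact: hl | lia].
exists (\sum_(p <- l) if a + n + p.1 == a then p.2 else 0).
  by rewrite big_seq; apply: big_ind => [|u v|p /hsel] //;
    [exact: ideal0 (Ipow_ideal _) | exact: idealD (Ipow_ideal _)].
rewrite act_sumr //.
have hcomp : \sum_(p <- l | a + n + p.1 == a) act p.1 p.2 y = z.
  pose L := (a, - z) :: [seq (a + n + p.1, act p.1 p.2 y) | p <- l].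
  have hL p : p \in L -> wspace (orb p.1) p.2.
    rewrite inE => /orP [/eqP -> | /mapP [q hq ->]] /=; first exact: wspaceN.
    exact: wspace_act hy (hl q hq).
  have hL0 : \sum_(p <- L) p.2 = 0 by rewrite big_cons big_map /= -ez addNr.
  have := wspace_sum_eq0 hL hL0 a; rewrite big_cons /= eqxx big_map /= => h.
  by apply/eqP; rewrite -subr_eq0 addrC h.
rewrite -{1}hcomp big_mkcond; apply: eq_big_seq => p hp /=.
case: eqP => [e | _]; last by rewrite act0r.
by rewrite (_ : p.1 = - n) //; apply: (@addrI _ (a + n)); rewrite e addrK.
Qed.

(* If r t^n z were nonzero, simplicity would recover z as s t^(-n) (r t^n z),
   and the coefficient of this round trip out of (lo, hi] lies in sigma^a(m0),
   which annihilates z. *)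
Lemma act_outside_eq0 lo hi a n r (z : mtype) :
  (forall c, lo = Some c -> brk c) -> (forall b, hi = Some b -> brk b) ->
  wspace (orb a) z -> inI lo hi a -> ~~ inI lo hi (a + n) -> Ipow n r -> act n r z = 0.
Proof.
move=> Hlo Hhi hz ha hn hr; apply: contrapT => ny.
have [s hs ez] := span_wspace_homog (wspace_act hz hr) hz (simple_span ny z).
have z0 : z = 0.
  rewrite {1}ez actA // addNr; apply: hz.
  by have := orb_Ipow_mul_outside Hlo Hhi ha hn _ hs hr; rewrite addrK; apply.
by apply: ny; rewrite z0 act0.
Qed.

Section Classification.
Variables lo hi : option int.
Hypotheses (Hlo : forall c, lo = Some c -> brk c) (Hhi : forall b, hi = Some b -> brk b).
Hypotheses (Hin : forall a, inI lo hi a -> inI lo hi (a + 1) -> ~ brk a) (Hne : exists a, inI lo hi a).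
Local Notation I := (inI lo hi).
Local Notation MI := (MI sigma sigmai m0 lo hi).
Local Notation cls := (cls sigma sigmai m0 lo hi).
Local Notation rep := (rep (sigma:=sigma) (sigmai:=sigmai) (m0:=m0) (lo:=lo) (hi:=hi)).
Variables (a0 : int) (w : mtype).
Hypotheses (hw : wspace (orb a0) w) (nw : w <> 0) (ha0 : I a0).

Lemma Ipow_notin_orb a : I a -> exists e, Ipow (a - a0) e /\ ~ orb a e.
Proof.
move=> ha; have [hab | hab] := lerP a0 a.
  have [k ek] : exists k : nat, a - a0 = k by apply: ge0_Posz; lia.
  rewrite ek Ipow_pos; apply: iprod_notin (orb_prime a) _ => i hik.
  have hc : I (a - i%:Z - 1) by apply: inI_between ha0 ha _; lia.
  have hc1 : I (a - i%:Z - 1 + 1) by apply: inI_between ha0 ha _; lia.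
  have [j [_ hj nj]] := not_brk_HJ (Hin hc hc1).
  exists (spow i j); split; first by rewrite simg_spow.
  by rewrite (_ : a = a - i%:Z - 1 + 1 + i) ?orb_spow //; lia.
have [k ek] : exists k : nat, a0 - a - 1 = k by apply: ge0_Posz; lia.
rewrite (_ : a - a0 = Negz k) ?Ipow_neg; last by rewrite NegzE; lia.
apply: iprod_notin (orb_prime a) _ => i hik.
have hc : I (a + i%:Z) by apply: inI_between ha ha0 _; lia.
have hc1 : I (a + i%:Z + 1) by apply: inI_between ha ha0 _; lia.
have [h [hh _ nh]] := not_brk_HJ (Hin hc hc1).
exists (spow (Negz i) h); split; first by rewrite simg_spow.
by rewrite (_ : a = a + i%:Z + 1 + Negz i) ?orb_spow // NegzE; lia.
Qed.

Lemma Ipow_one_mod_orb a : exists g, I a -> Ipow (a - a0) g /\ orb a (g - 1).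
Proof.
have [ha | ha] := boolP (I a); last by exists 0.
have [e [he ne]] := Ipow_notin_orb ha; have [d hd] := max_ideal_inv (orb_max a) ne.
by exists (d * e) => _; split => //; apply: idealMl (Ipow_ideal _) he.
Qed.

(* The g_a of the header. *)
Definition lift1 a := projT1 (cid (Ipow_one_mod_orb a)).
Lemma lift1P a : I a -> Ipow (a - a0) (lift1 a) /\ orb a (lift1 a - 1).
Proof. exact: projT2 (cid (Ipow_one_mod_orb a)). Qed.

Lemma lift1_notin a : I a -> ~ orb a (lift1 a).
Proof.
move=> ha hg; apply: (@orb_neq1 a); rewrite -[1](subKr (lift1 a)).
exact: idealB (orb_ideal a) hg (proj2 (lift1P ha)).
Qed.

Definition wvec a : mtype := act (a - a0) (lift1 a) w.
Lemma wvec_wspace a : I a -> wspace (orb a) (wvec a).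
Proof. by move=> ha; have := wspace_act hw (proj1 (lift1P ha)); rewrite subrKC. Qed.

Lemma act_w_congr k s s' : I (a0 + k) -> Ipow k s -> Ipow k s' ->
  orb (a0 + k) (s - s') -> act k s w = act k s' w.
Proof.
move=> hk hs hs' hd; apply/eqP; rewrite -subr_eq0 -actBr //; apply/eqP.
have [hg _] := lift1P hk; rewrite addrC addKr in hg.
have hss : Ipow k (s - s') := idealB (Ipow_ideal k) hs hs'.
apply: (wspace_eq0 (orb_max (a0 + k)) (wspace_act hw hss) (lift1_notin hk)).
rewrite actA // add0r spow_id mulrC.
have := actA w (Ipow0 (s - s')) hg; rewrite add0r spow_id => <-.
by rewrite (wspace_act hw hg) // act0.
Qed.

Definition vimg a c : mtype := if I a then act 0 c (wvec a) else 0.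

Lemma vimg0 a : vimg a 0 = 0.
Proof. by rewrite /vimg; case: ifP; rewrite ?act0r. Qed.
Lemma vimgD a c c' : vimg a (c + c') = vimg a c + vimg a c'.
Proof. by rewrite /vimg; case: ifP; rewrite ?addr0 // actDr. Qed.
Lemma vimgN a c : vimg a (- c) = - vimg a c.
Proof. by rewrite /vimg; case: ifP; rewrite ?oppr0 // actNr. Qed.

Lemma vimgE b c : I b -> vimg b c = act (b - a0) (c * lift1 b) w.
Proof. by move=> hb; rewrite /vimg hb /wvec actA ?add0r //; apply: (proj1 (lift1P hb)). Qed.

Lemma vimg_wspace b c : I b -> wspace (orb b) (vimg b c).
Proof.
move=> hb; rewrite vimgE //; have := wspace_act hw (idealMl (Ipow_ideal _) (proj1 (lift1P hb))).
by rewrite subrKC; apply.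
Qed.

Lemma act_vimg_in b c n r : Ipow n r -> I b -> I (b + n) ->
  act n r (vimg b c) = vimg (b + n) (r * spow n c).
Proof.
move=> hr hb hbn; have [hg hg1] := lift1P hb; have [hg' hg1'] := lift1P hbn.
have hcg : Ipow (b - a0) (c * lift1 b) := idealMl (Ipow_ideal _) hg.
rewrite !vimgE // actA // (_ : n + (b - a0) = b + n - a0); last by lia.
have hbn' : I (a0 + (b + n - a0)) by rewrite subrKC.
apply: act_w_congr hbn' _ (idealMl (Ipow_ideal _) hg') _.
  by have := Ipow_mul hr hcg; rewrite (_ : n + (b - a0) = b + n - a0) //; lia.
rewrite subrKC spowM mulrA -mulrBr; apply: idealMl (orb_ideal _) _.
rewrite (_ : spow n (lift1 b) - lift1 (b + n) = spow n (lift1 b - 1) - (lift1 (b + n) - 1));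
  last by rewrite spowB spow1; ring.
by apply: idealB (orb_ideal _) _ hg1'; rewrite orb_spow.
Qed.

Lemma act_vimg b c n r : Ipow n r -> I b -> act n r (vimg b c) = vimg (b + n) (r * spow n c).
Proof.
move=> hr hb; have [hbn | hbn] := boolP (I (b + n)); first exact: act_vimg_in.
by rewrite {2}/vimg (negPf hbn); apply: act_outside_eq0 Hlo Hhi (vimg_wspace _ hb) hb hbn hr.
Qed.

Definition fimg (x : seq (int * R)) : mtype := \sum_(p <- x) vimg p.1 p.2.

Lemma fimg_coef x (L : seq int) : uniq L -> {subset map fst x <= L} ->
  fimg x = \sum_(a <- L) vimg a (coef x a).
Proof.
move=> uL; elim: x => [|[b c] x IH] hsub.
  by rewrite /fimg big_nil big1 // => a _; rewrite coef_nil vimg0.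
rewrite /fimg big_cons -/(fimg x) IH; last by move=> a ha; apply: hsub; rewrite /= in_cons ha orbT.
under [RHS]eq_bigr do rewrite coef_cons vimgD.
rewrite big_split /=; congr (_ + _).
have hb : b \in L by apply: hsub; rewrite /= in_cons eqxx.
rewrite (bigD1_seq b) //= eqxx big1 ?addr0 // => a /negPf.
by rewrite eq_sym => ->; rewrite vimg0.
Qed.

Lemma fimg_reln x y : reln sigma sigmai m0 lo hi x y -> fimg x = fimg y.
Proof.
move=> h; set L := undup (map fst (x ++ y)).
have hx : {subset map fst x <= L} by move=> a ha; rewrite mem_undup map_cat mem_cat ha.
have hy : {subset map fst y <= L} by move=> a ha; rewrite mem_undup map_cat mem_cat ha orbT.
rewrite (fimg_coef (undup_uniq _) hx) (fimg_coef (undup_uniq _) hy).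
apply: eq_bigr => a _; rewrite /vimg; case: ifP => ha //.
by apply/eqP; rewrite -subr_eq0 -actBr //; apply/eqP; apply: (wvec_wspace ha); apply: h.
Qed.

Definition phi (u : mcar MI) : mtype := fimg (rep u).

Lemma phi_cls x : phi (cls x) = fimg x.
Proof. exact/fimg_reln/rep_cls. Qed.

Lemma phi_add u v : phi (madd u v) = phi u + phi v.
Proof. by elim/cls_ind: u => x; elim/cls_ind: v => y; rewrite madd_cls !phi_cls /fimg big_cat. Qed.
Lemma phi_opp u : phi (mopp u) = - phi u.
Proof.
elim/cls_ind: u => x; rewrite mopp_cls !phi_cls /fimg big_map -sumrN.
by apply: eq_bigr => p _; rewrite vimgN.
Qed.
Lemma phi_zero : phi (mzero MI) = 0.
Proof. by rewrite mzero_cls phi_cls /fimg big_nil. Qed.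

Lemma phi_act n r u : Ipow n r -> phi (@mact _ MI n r u) = act n r (phi u).
Proof.
move=> hr; elim/cls_ind: u => x; rewrite mact_cls !phi_cls.
elim: x => [|[b c] x IH]; first by rewrite /fimg !big_nil act0.
rewrite rawact_cons /fimg big_cons actD //= -/(fimg x) -IH; case: ifP => hb.
  by rewrite big_cons act_vimg.
by rewrite /vimg hb act0 // add0r.
Qed.

Lemma phi_w : phi (cls [:: (a0, 1)]) = w.
Proof.
have [hg hg1] := lift1P ha0; rewrite subrr in hg.
rewrite phi_cls /fimg big_seq1 vimgE // subrr mul1r -{2}(act1 w).
by apply: act_w_congr; rewrite ?addr0.
Qed.

Lemma phi_inj : injective phi.
Proof.
pose N u := phi u = 0.
have hN : is_submod sigma sigmai H J N.
  split; first exact: phi_zero.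
  split; first by move=> x y; rewrite /N phi_add => -> ->; rewrite addr0.
  split; first by move=> x; rewrite /N phi_opp => ->; rewrite oppr0.
  by move=> n r x hr; rewrite /N phi_act // => ->; rewrite act0.
have N0 u : N u -> u = mzero MI.
  case: (proj2 (MI_simple Hin Hne) N hN) => [h0 | hall]; first exact: h0.
  by case: nw; rewrite -phi_w; apply: hall.
move=> u v e; have /N0 : N (madd u (mopp v)) by rewrite /N phi_add phi_opp e subrr.
elim/cls_ind: u {e} => x; elim/cls_ind: v => y; rewrite mopp_cls madd_cls => /cls_eq0 h.
by apply/cls_eqP => a ha; have := h a ha; rewrite coef_cat coef_opp.
Qed.

Lemma phi_surj (y : mtype) : exists u, phi u = y.
Proof.
pose N (y : mcar M) := exists u, phi u = y.
have hN : is_submod sigma sigmai H J N.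
  split; first by exists (mzero MI); rewrite phi_zero.
  split; first by move=> x1 x2 [u1 <-] [u2 <-]; exists (madd u1 u2); rewrite phi_add.
  split; first by move=> x1 [u1 <-]; exists (mopp u1); rewrite phi_opp.
  by move=> n r x1 hr [u1 <-]; exists (@mact _ MI n r u1); rewrite phi_act.
case: (proj2 HS N hN) => [h | ]; last exact.
by case: nw; apply: h; exists (cls [:: (a0, 1)]); rewrite phi_w.
Qed.

Lemma weight_simple_iso : bmod_iso sigma sigmai H J M MI.
Proof.
pose f y := projT1 (cid (phi_surj y)).
have fK : cancel f phi by move=> y; rewrite /f; case: cid.
exists f; split; first by exists phi => // u; apply: phi_inj; rewrite fK.
split; first by move=> x y; apply: phi_inj; rewrite phi_add !fK.
by move=> n r x hr; apply: phi_inj; rewrite phi_act // !fK.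
Qed.
End Classification.
End AbstractModule.

Lemma MI_add_idem lo hi (z : mcar (MI sigma sigmai m0 lo hi)) : madd z z = z -> z = mzero _.
Proof.
elim/cls_ind: z => x; rewrite madd_cls => /cls_eqP h; apply/cls_eq0 => a ha.
by have := h a ha; rewrite coef_cat addrK.
Qed.

Lemma MI_wspace_supp lo hi a0 (v : mcar (MI sigma sigmai m0 lo hi)) :
  wspace (orb a0) v -> v <> mzero _ -> inI lo hi a0.
Proof.
move=> hv nv; apply: contraT => hn; case: nv; elim/cls_ind: v hv => x hx.
apply/cls_eq0 => a ha; apply: contrapT => hc.
have ea := orb_inj (wspace_coef_orb (orb_max a0) hx ha hc).
by rewrite ea ha in hn.
Qed.

Lemma iso_wspace_supp (M : bmod R) lo hi a0 (w : mcar M) : is_bmod sigma sigmai H J M ->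
  wspace (orb a0) w -> w <> mzero M ->
  bmod_iso sigma sigmai H J M (MI sigma sigmai m0 lo hi) -> inI lo hi a0.
Proof.
move=> HM hw nw [f [fbij [fadd fact]]].
have f0 : f (mzero M) = mzero _ by apply: MI_add_idem; rewrite -fadd (mtype_add0 HM).
apply: (MI_wspace_supp (v := f w)); first by move=> q hq; rewrite -fact // hw // f0.
by move=> e; case: nw; apply: (bij_inj fbij); rewrite e f0.
Qed.

Lemma simple_weight_vec (M : bmod R) : is_bmod sigma sigmai H J M -> is_simple sigma sigmai H J M ->
  is_weight M -> supp_in_orbit sigma sigmai m0 M ->
  exists a0 (w : mcar M), wspace (orb a0) w /\ w <> mzero M.
Proof.
move=> HM [[v nv] _] [hspan _] hsupp; have [s [hs ev]] := hspan v.
case: (pselect (exists p, List.In p s /\ p.2 <> mzero M)) => [[[m u] [hin nu]] | hno].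
  have [hm hu] := proj1 (List.Forall_forall _ s) hs _ hin.
  by have [a ea] := hsupp m hm (ex_intro _ u (conj hu nu)); exists a, u; rewrite -ea.
case: nv; rewrite ev; elim: s {hs ev} hno => [|p s IH] hno //.
rewrite (_ : msum _ = madd p.2 (msum (List.map snd s))) // IH => [|[q [hq nq]]]; last first.
  by apply: hno; exists q; split => //; right.
have -> : p.2 = mzero M by apply: contrapT => np; apply: hno; exists p; split => //; left.
exact: (mtype_add0 HM).
Qed.

(** * Breaks and the intervals (n^-, n] *)

Local Notation in_beta' := (in_beta' sigma sigmai H J m0).
Local Notation is_nminus := (is_nminus sigma sigmai H J m0).

Lemma beta'_interval (n lo : option int) : in_beta' n -> is_nminus n lo ->
  [/\ (forall c, lo = Some c -> brk c), (forall b, n = Some b -> brk b),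
      (forall a, inI lo n a -> inI lo n (a + 1) -> ~ brk a) & (exists a, inI lo n a)].
Proof.
move=> hn hlo; split.
- by move=> c elo; rewrite elo in hlo; case: hlo.
- by move=> b en; rewrite en in hn.
- move=> a h1 h2 hb.
  have hlt : lt_opt a n.
    by move: h2; rewrite /inI /lt_opt; case: (lo) => [?|]; case: (n) => [?|] //=; lia.
  case: lo hlo h1 {h2} => [c [_ [_ hmax]]|hnone _]; last exact: hnone a hb hlt.
  by rewrite /inI /= => /andP [hca _]; have := hmax a hb hlt; lia.
- case: lo hlo => [c|]; case: n hn => [b|] /= _.
  + by move=> [_ [hcb _]]; exists b; rewrite /inI /=; lia.
  + by move=> _; exists (c + 1); rewrite /inI /=; lia.
  + by move=> _; exists b; rewrite /inI /=; lia.
  + by move=> _; exists 0.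
Qed.

Lemma beta'_interval_exists a0 : (exists b, brk b) ->
  exists n lo : option int, [/\ in_beta' n, is_nminus n lo & inI lo n a0].
Proof.
move=> hex; case: (pselect (exists b, brk b /\ a0 <= b)) => [hge | hno].
  have [b [[hb hab] hmin]] := int_bounded_min hge (fun c h => proj2 h).
  exists (Some b); case: (pselect (exists c, brk c /\ c < a0)) => [hlt | hnl].
    have [c [[hc hca] hmax]] := int_bounded_max hlt (fun c h => ltW (proj2 h)).
    exists (Some c); split => //; last by rewrite /inI /=; lia.
    split => //; split=> [|c' hc' hlt']; first by rewrite /lt_opt; lia.
    case: (lerP a0 c') => h; last exact: hmax.
    by have := hmin c' (conj hc' h); rewrite /lt_opt in hlt'; lia.
  exists None; split; [done | | by rewrite /inI /=].
  move=> c' hc' hlt'; apply: hnl; exists c'; split => //; rewrite /lt_opt in hlt'.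
  by case: (lerP a0 c') => h //; have := hmin c' (conj hc' h); lia.
have hall c : brk c -> c < a0 by move=> hc; case: (lerP a0 c) => h //; case: hno; exists c.
have [c [hc hmax]] := int_bounded_max hex (fun c h => ltW (hall c h)).
exists None, (Some c); split; first by exists c.
  by split => //; split => // c' hc' _; apply: hmax.
by rewrite /inI /= andbT; apply: hall.
Qed.

Lemma beta'_interval_brk_lt (n lo : option int) a0 : is_nminus n lo -> inI lo n a0 ->
  forall c, brk c -> lt_opt c n -> c < a0.
Proof.
move=> hlo hi c hc hlt; case: lo hlo hi => [c1 [_ [_ hmax]]|hnone] /=; last by case: (hnone c hc hlt).
by rewrite /inI /= => /andP [hca _]; have := hmax c hc hlt; lia.
Qed.

Lemma beta'_interval_uniq a0 (n lo n' lo' : option int) :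
  in_beta' n -> is_nminus n lo -> inI lo n a0 ->
  in_beta' n' -> is_nminus n' lo' -> inI lo' n' a0 -> n' = n.
Proof.
move=> hn hlo hi hn' hlo' hi'.
have F := beta'_interval_brk_lt hlo hi; have F' := beta'_interval_brk_lt hlo' hi'; clear hlo hlo'.
have le_hi (l : option int) b : inI l (Some b) a0 -> a0 <= b by rewrite /inI; case: l => /= *; lia.
case: n hn hi F => [b|] hn hi F; case: n' hn' hi' F' => [b'|] hn' hi' F' //.
- have := le_hi _ _ hi; have := le_hi _ _ hi'.
  by case: (ltrgtP b b') => [hlt|hlt|->] //; [have := F' b hn hlt | have := F b' hn' hlt]; lia.
- by have := le_hi _ _ hi; have := F' b hn isT; lia.
- by have := le_hi _ _ hi'; have := F b' hn' isT; lia.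
Qed.

Lemma MO_classification : (forall a, ~ brk a) ->
  let MO := MO sigma sigmai m0 in
  is_bmod sigma sigmai H J MO /\ is_simple sigma sigmai H J MO /\ is_weight MO /\
  (forall M : bmod R, is_bmod sigma sigmai H J M -> is_simple sigma sigmai H J M ->
     is_weight M -> supp_in_orbit sigma sigmai m0 M -> bmod_iso sigma sigmai H J M MO).
Proof.
move=> hnob MO; have Hnone c : (None : option int) = Some c -> brk c by [].
have Hin a : inI None None a -> inI None None (a + 1) -> ~ brk a by move=> _ _; apply: hnob.
split; first exact: MI_bmod.
split; first exact: MI_simple Hin (ex_intro _ 0 isT).
split; first exact: MI_weight.
move=> M HM HS HW Hsupp; have [a0 [w [hw nw]]] := simple_weight_vec HM HS HW Hsupp.
exact: (weight_simple_iso (HM := HM) HW HS Hnone Hnone Hin (ex_intro _ 0 isT) hw nw isT).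
Qed.

Lemma MOn_classification : (exists a, brk a) ->
  (forall n lo : option int, in_beta' n -> is_nminus n lo ->
     is_bmod sigma sigmai H J (MOn sigma sigmai m0 lo n) /\
     is_simple sigma sigmai H J (MOn sigma sigmai m0 lo n) /\
     is_weight (MOn sigma sigmai m0 lo n)) /\
  (forall M : bmod R, is_bmod sigma sigmai H J M -> is_simple sigma sigmai H J M ->
     is_weight M -> supp_in_orbit sigma sigmai m0 M ->
     exists n lo : option int,
       in_beta' n /\ is_nminus n lo /\ bmod_iso sigma sigmai H J M (MOn sigma sigmai m0 lo n) /\
       (forall n' lo' : option int, in_beta' n' -> is_nminus n' lo' ->
          bmod_iso sigma sigmai H J M (MOn sigma sigmai m0 lo' n') -> n' = n)).
Proof.
move=> hb; split.
  move=> n lo hn hlo; have [Hlo Hhi Hin Hne] := beta'_interval hn hlo.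
  by split; [exact: MI_bmod | split; [exact: MI_simple | exact: MI_weight]].
move=> M HM HS HW Hsupp; have [a0 [w [hw nw]]] := simple_weight_vec HM HS HW Hsupp.
have [n [lo [hn hlo hi]]] := beta'_interval_exists a0 hb.
have [Hlo Hhi Hin Hne] := beta'_interval hn hlo.
exists n, lo; do 2!split => //; split.
  exact: (weight_simple_iso (HM := HM) HW HS Hlo Hhi Hin Hne hw nw hi).
move=> n' lo' hn' hlo' /(iso_wspace_supp HM hw nw) hi'.
exact: beta'_interval_uniq hn hlo hi hn' hlo' hi'.
Qed.
End BellRogalski.

Theorem theorem3p9
  (k : fieldType) (R : idomainType) (phi : {rmorphism k -> R})
  (sigma : {rmorphism R -> R}) (sigmai : R -> R)
  (Hs1 : cancel sigma sigmai) (Hs2 : cancel sigmai sigma)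
  (Hk : forall c : k, sigma (phi c) = phi c)
  (H J : R -> Prop) (HH : is_ideal H) (HJ : is_ideal J)
  (Hnz : forall n : int, exists x, Ipow sigma sigmai H J n x /\ x <> 0)
  (m0 : R -> Prop) (Hm0 : is_max_ideal m0)
  (Hinf : orbit_infinite sigma sigmai m0) :
  ((forall a : int, ~ brk sigma sigmai H J m0 a) ->
     let MO := MO sigma sigmai m0 in
     is_bmod sigma sigmai H J MO /\ is_simple sigma sigmai H J MO /\ is_weight MO /\
     (forall M : bmod R, is_bmod sigma sigmai H J M -> is_simple sigma sigmai H J M ->
        is_weight M -> supp_in_orbit sigma sigmai m0 M ->
        bmod_iso sigma sigmai H J M MO))
  /\
  ((exists a : int, brk sigma sigmai H J m0 a) ->
     (forall n lo : option int, in_beta' sigma sigmai H J m0 n ->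
        is_nminus sigma sigmai H J m0 n lo ->
        is_bmod sigma sigmai H J (MOn sigma sigmai m0 lo n) /\
        is_simple sigma sigmai H J (MOn sigma sigmai m0 lo n) /\
        is_weight (MOn sigma sigmai m0 lo n)) /\
     (forall M : bmod R, is_bmod sigma sigmai H J M -> is_simple sigma sigmai H J M ->
        is_weight M -> supp_in_orbit sigma sigmai m0 M ->
        exists n lo : option int,
          in_beta' sigma sigmai H J m0 n /\ is_nminus sigma sigmai H J m0 n lo /\
          bmod_iso sigma sigmai H J M (MOn sigma sigmai m0 lo n) /\
          (forall n' lo' : option int, in_beta' sigma sigmai H J m0 n' ->
             is_nminus sigma sigmai H J m0 n' lo' ->
             bmod_iso sigma sigmai H J M (MOn sigma sigmai m0 lo' n') -> n' = n))).
Proof.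
split; first exact: (MO_classification Hs1 Hs2 HH HJ Hm0 Hinf).
exact: (MOn_classification Hs1 Hs2 HH HJ Hm0 Hinf).
Qed.
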